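(* Let $T\in\mathcal B(\mathcal H)$ be such that either $T$ or $T^*$ is quasitriangular. Let $\{P_n\}$ be a filtration with $\|(I-P_n)TP_n\|\to0$ in the first case and with $\|(I-P_n)T^*P_n\|\to0$ in the second case, and put $T_n=P_nT|_{P_n\mathcal H}$. Then $\Psi_{T_n}\to\Psi_T$ uniformly on $\mathbb C$.
   Context: $\mathcal H$ is a complex separable Hilbert space. For an operator $A$, $\Psi_A(z)=0$ for $z\in\sigma(A)$ and $\Psi_A(z)=\|(A-z)^{-1}\|^{-1}$ otherwise. A filtration is a sequence $\{P_n\}$ of finite-rank orthogonal projections with $\operatorname{Ran}P_n\subseteq\operatorname{Ran}P_{n+1}$ and $\bigcup_n\operatorname{Ran}P_n$ dense. $T$ is quasitriangular if there is a filtration $\{P_n\}$ with $\|(I-P_n)TP_n\|\to0$. *)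

From Stdlib Require Import Reals Lra List Classical ClassicalEpsilon.
Open Scope R_scope.

Record Cx := mkC { Cre : R; Cim : R }.
Definition C0 : Cx := mkC 0 0.
Definition C1 : Cx := mkC 1 0.
Definition Cadd (a b : Cx) : Cx := mkC (Cre a + Cre b) (Cim a + Cim b).
Definition Cmul (a b : Cx) : Cx :=
  mkC (Cre a * Cre b - Cim a * Cim b) (Cre a * Cim b + Cim a * Cre b).
Definition Cconj (a : Cx) : Cx := mkC (Cre a) (- Cim a).

Set Implicit Arguments.
Record HilbertSpace := {
  hcar :> Type;
  vzero : hcar;
  vadd : hcar -> hcar -> hcar;
  vopp : hcar -> hcar;
  vscal : Cx -> hcar -> hcar;
  inner : hcar -> hcar -> Cx;
  vadd_assoc : forall x y z, vadd x (vadd y z) = vadd (vadd x y) z;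
  vadd_comm : forall x y, vadd x y = vadd y x;
  vadd_0 : forall x, vadd vzero x = x;
  vadd_opp : forall x, vadd (vopp x) x = vzero;
  vscal_assoc : forall a b x, vscal a (vscal b x) = vscal (Cmul a b) x;
  vscal_1 : forall x, vscal C1 x = x;
  vscal_addv : forall a x y, vscal a (vadd x y) = vadd (vscal a x) (vscal a y);
  vscal_adds : forall a b x, vscal (Cadd a b) x = vadd (vscal a x) (vscal b x);
  inner_conj : forall x y, inner y x = Cconj (inner x y);
  inner_lin : forall a x y z,
    inner (vadd (vscal a x) y) z = Cadd (Cmul a (inner x z)) (inner y z);
  inner_pos : forall x, 0 <= Cre (inner x x);
  inner_def : forall x, Cre (inner x x) = 0 -> x = vzero
}.

Arguments vzero {h}.
Arguments vadd {h}.
Arguments vopp {h}.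
Arguments vscal {h}.
Arguments inner {h}.

Section HS.
Variable H : HilbertSpace.

Definition vsub (x y : H) : H := vadd x (vopp y).
Definition hnorm (x : H) : R := sqrt (Cre (inner x x)).

Definition complete_space : Prop :=
  forall u : nat -> H,
    (forall eps, eps > 0 -> exists N, forall m n, (m >= N)%nat -> (n >= N)%nat ->
        hnorm (vsub (u m) (u n)) < eps) ->
    exists l : H, Un_cv (fun n => hnorm (vsub (u n) l)) 0.
Definition separable_space : Prop :=
  exists d : nat -> H, forall x eps, eps > 0 -> exists n, hnorm (vsub x (d n)) < eps.

Definition linear_op (A : H -> H) : Prop :=
  (forall x y, A (vadd x y) = vadd (A x) (A y)) /\
  (forall a x, A (vscal a x) = vscal a (A x)).
Definition bounded_op (A : H -> H) : Prop :=
  exists K, forall x, hnorm (A x) <= K * hnorm x.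
Definition is_bounded_operator (A : H -> H) : Prop := linear_op A /\ bounded_op A.
Definition is_adjoint (A B : H -> H) : Prop :=
  forall x y, inner (A x) y = inner x (B y).

(* a classical supremum of a set of reals (0 if not bounded above or empty) *)
Definition Rsup (E : R -> Prop) : R :=
  match excluded_middle_informative (bound E /\ exists x, E x) with
  | left h => proj1_sig (completeness E (proj1 h) (proj2 h))
  | right _ => 0
  end.

Definition opnorm_on (M : H -> Prop) (A : H -> H) : R :=
  Rsup (fun r => exists x, M x /\ hnorm x <= 1 /\ r = hnorm (A x)).
Definition full : H -> Prop := fun _ => True.
Definition opnorm (A : H -> H) : R := opnorm_on full A.

Definition shift (A : H -> H) (z : Cx) : H -> H := fun x => vsub (A x) (vscal z x).

Definition bounded_inverse_on (M : H -> Prop) (B Rinv : H -> H) : Prop :=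
  (forall x, M x -> M (Rinv x)) /\
  (forall x, M x -> Rinv (B x) = x) /\
  (forall x, M x -> B (Rinv x) = x) /\
  (exists K, forall x, M x -> hnorm (Rinv x) <= K * hnorm x).

(* Psi of the operator A|_M : M -> M (A is assumed to leave M invariant):
   0 on the spectrum (no bounded inverse of A - z on M), and
   ||(A|_M - z)^{-1}||^{-1} otherwise. *)
Definition Psi_on (M : H -> Prop) (A : H -> H) (z : Cx) : R :=
  match excluded_middle_informative
          (exists Rinv, bounded_inverse_on M (shift A z) Rinv) with
  | left h => / opnorm_on M (proj1_sig (constructive_indefinite_description _ h))
  | right _ => 0
  end.
Definition Psi (A : H -> H) (z : Cx) : R := Psi_on full A z.

Definition range (P : H -> H) : H -> Prop := fun y => exists x, P x = y.

Definition finite_rank (P : H -> H) : Prop :=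
  exists (k : nat) (e : nat -> H), forall y, range P y ->
    exists c : nat -> Cx,
      y = fold_right (fun i acc => vadd (vscal (c i) (e i)) acc) (vzero) (seq 0 k).
Definition orth_projection (P : H -> H) : Prop :=
  is_bounded_operator P /\ (forall x, P (P x) = P x) /\ is_adjoint P P.

Definition filtration (P : nat -> H -> H) : Prop :=
  (forall n, orth_projection (P n) /\ finite_rank (P n)) /\
  (forall n y, range (P n) y -> range (P (S n)) y) /\
  (forall x eps, eps > 0 -> exists n y, range (P n) y /\ hnorm (vsub x y) < eps).

End HS.

(* If [A - z] is invertible, [Psi_A(z) = inf_{|x|=1} |(A - z) x| = inf_{|x|=1} |(A - z)^* x|];
   otherwise [Psi_A(z) = 0] and one of these infima vanishes, since an operator which is bounded
   below together with its adjoint is invertible.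

   Upper bound: for unit [x] in [Ran P_n], [Psi_{T_n}(z) <= |P_n (T - z) x| <= |(T - z) x|], and
   likewise for the adjoints.  Writing [|(T - z) x|^2 = |z|^2 + (1 + |z|) q(x)] with a quadratic
   form [q] depending Lipschitz-continuously on a parameter in a compact box, unit vectors of
   [Ran P_n] approximate every unit vector of [H] in these quantities uniformly in [z], so
   [Psi_{T_n}(z) <= Psi_T(z) + o(1)].

   Lower bound: [|(T_n - z) x| >= |(T - z) x| - |(I - P_n) T P_n| |x| >= (Psi_T(z) - o(1)) |x|] on
   [Ran P_n]; in the other case the same holds for [T_n^*] and passes to [T_n] because
   [Ran P_n] is finite dimensional, where a lower bound also bounds [Psi_{T_n}(z)] from below. *)

From Stdlib Require Import Reals Lra Lia List Classical ClassicalEpsilon ZArith.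
From Pilot Require Import Defs.
Open Scope R_scope.

Arguments vadd_assoc {h}. Arguments vadd_comm {h}. Arguments vadd_0 {h}. Arguments vadd_opp {h}.
Arguments vscal_assoc {h}. Arguments vscal_1 {h}. Arguments vscal_addv {h}. Arguments vscal_adds {h}.
Arguments inner_conj {h}. Arguments inner_lin {h}. Arguments inner_pos {h}. Arguments inner_def {h}.

Lemma Cx_ext (a b : Cx) : Cre a = Cre b -> Cim a = Cim b -> a = b.
Proof. destruct a, b; simpl; intros -> ->; reflexivity. Qed.

Definition RC (r : R) : Cx := mkC r 0.
Definition Copp (a : Cx) : Cx := mkC (- Cre a) (- Cim a).
Definition Cn2 (a : Cx) : R := Cre a * Cre a + Cim a * Cim a.
Definition Cabs (a : Cx) : R := sqrt (Cn2 a).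
Definition Cinv (a : Cx) : Cx := mkC (Cre a / Cn2 a) (- Cim a / Cn2 a).

Lemma Cn2_ge0 a : 0 <= Cn2 a.
Proof. unfold Cn2; nra. Qed.

Lemma Cn2_eq0 a : Cn2 a = 0 -> a = C0.
Proof. unfold Cn2; intro h; apply Cx_ext; simpl; nra. Qed.

Lemma Cn2_gt0 a : a <> C0 -> 0 < Cn2 a.
Proof.
  intro h. destruct (Cn2_ge0 a) as [|e]; [assumption|].
  exfalso; apply h, Cn2_eq0; auto.
Qed.

Lemma Cmul_Vl a : a <> C0 -> Cmul (Cinv a) a = C1.
Proof.
  intro h. pose proof (Cn2_gt0 _ h). unfold Cinv, Cn2 in *.
  apply Cx_ext; simpl; field; lra.
Qed.

Lemma Cconj_invol z : Cconj (Cconj z) = z.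
Proof. apply Cx_ext; simpl; ring. Qed.

Lemma Cabs_sq a : Cabs a * Cabs a = Cn2 a.
Proof. apply sqrt_sqrt, Cn2_ge0. Qed.

Lemma Cabs_ge0 a : 0 <= Cabs a.
Proof. apply sqrt_pos. Qed.

Lemma sq_le_sq (a b : R) : 0 <= b -> a * a <= b * b -> a <= b.
Proof. intros. destruct (Rle_dec a b); auto. nra. Qed.

Lemma Rabs_le_bounds a b : Rabs a <= b -> - b <= a <= b.
Proof. intro h. pose proof (Rle_abs a). pose proof (Rle_abs (- a)) as hn. rewrite Rabs_Ropp in hn. lra. Qed.

Lemma Re_Im_le_Cabs (a : Cx) : Rabs (Cre a) <= Cabs a /\ Rabs (Cim a) <= Cabs a.
Proof.
  pose proof (Cabs_sq a); pose proof (Cabs_ge0 a); unfold Cn2 in *.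
  split; apply sq_le_sq; auto; rewrite <- Rabs_mult, Rabs_right; nra.
Qed.

Lemma Cabs_triangle a b : Cabs (Cadd a b) <= Cabs a + Cabs b.
Proof.
  pose proof (Cabs_sq a) as sa; pose proof (Cabs_sq b) as sb; pose proof (Cabs_sq (Cadd a b)).
  pose proof (Cabs_ge0 a); pose proof (Cabs_ge0 b).
  apply sq_le_sq; [lra|]. set (ca := Cabs a) in *. set (cb := Cabs b) in *.
  destruct a as [p q], b as [p' q']; unfold Cn2, Cadd in *; simpl in *.
  assert (p * p' + q * q' <= ca * cb).
  { apply sq_le_sq; [nra|]. replace (ca * cb * (ca * cb)) with ((ca * ca) * (cb * cb)) by ring.
    rewrite sa, sb. pose proof (Rle_0_sqr (p * q' - q * p')). unfold Rsqr in *. nra. }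
  nra.
Qed.

Section HilbertAlgebra.
Variable H : HilbertSpace.
Local Notation nrm := (hnorm H).
Local Notation vsub := (vsub H).

Lemma vadd_0r (x : H) : vadd x vzero = x.
Proof. rewrite vadd_comm; apply vadd_0. Qed.

Lemma vadd_oppr (x : H) : vadd x (vopp x) = vzero.
Proof. rewrite vadd_comm; apply vadd_opp. Qed.

Lemma vadd_cancel (x y z : H) : vadd x y = vadd x z -> y = z.
Proof.
  intro e. rewrite <- (vadd_0 y), <- (vadd_0 z), <- (vadd_opp x), <- !vadd_assoc, e.
  reflexivity.
Qed.

Lemma vscal_0 (x : H) : vscal C0 x = vzero.
Proof.
  apply (vadd_cancel (vscal C0 x)). rewrite <- vscal_adds, vadd_0r.
  f_equal; apply Cx_ext; simpl; ring.
Qed.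

Lemma vscal_zero (a : Cx) : vscal a (@vzero H) = vzero.
Proof. apply (vadd_cancel (vscal a vzero)). rewrite <- vscal_addv, vadd_0, vadd_0r; auto. Qed.

Lemma vopp_scal (x : H) : vopp x = vscal (RC (-1)) x.
Proof.
  apply (vadd_cancel x). rewrite vadd_oppr. rewrite <- (vscal_1 x) at 1.
  rewrite <- vscal_adds, <- (vscal_0 x). f_equal. apply Cx_ext; simpl; ring.
Qed.

Lemma vopp_vadd (x y : H) : vopp (vadd x y) = vadd (vopp x) (vopp y).
Proof. rewrite !vopp_scal. apply vscal_addv. Qed.

Lemma vopp_invol (x : H) : vopp (vopp x) = x.
Proof.
  rewrite !vopp_scal, vscal_assoc. rewrite <- (vscal_1 x) at 2.
  f_equal. apply Cx_ext; simpl; ring.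
Qed.

Lemma vadd_ACA (a b c d : H) : vadd (vadd a b) (vadd c d) = vadd (vadd a c) (vadd b d).
Proof. rewrite <- !vadd_assoc. f_equal. rewrite !vadd_assoc. f_equal. apply vadd_comm. Qed.

Lemma vsub_self (x : H) : vsub x x = vzero.
Proof. apply vadd_oppr. Qed.

Lemma vsub_0r (x : H) : vsub x vzero = x.
Proof. unfold Defs.vsub. rewrite vopp_scal, vscal_zero. apply vadd_0r. Qed.

Lemma vsub_add (x y : H) : vadd (vsub x y) y = x.
Proof. unfold Defs.vsub. rewrite <- vadd_assoc, vadd_opp, vadd_0r; auto. Qed.

Lemma vsub_eq0 (x y : H) : vsub x y = vzero -> x = y.
Proof. intro e. rewrite <- (vsub_add x y), e, vadd_0; auto. Qed.

Lemma vsub_opp (x y : H) : vsub x y = vopp (vsub y x).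
Proof. unfold Defs.vsub. rewrite vopp_vadd, vopp_invol, vadd_comm; auto. Qed.

Lemma vsub_split (x y w : H) : vsub x y = vadd (vsub x w) (vsub w y).
Proof. unfold Defs.vsub. rewrite <- vadd_assoc, (vadd_assoc (vopp w)), vadd_opp, vadd_0; auto. Qed.

Lemma vsub_vadd (a b c d : H) : vsub (vadd a b) (vadd c d) = vadd (vsub a c) (vsub b d).
Proof. unfold Defs.vsub. rewrite vopp_vadd. apply vadd_ACA. Qed.

Lemma vscal_vsub a (x y : H) : vscal a (vsub x y) = vsub (vscal a x) (vscal a y).
Proof.
  unfold Defs.vsub. rewrite vscal_addv, !vopp_scal, !vscal_assoc.
  do 2 f_equal. apply Cx_ext; simpl; ring.
Qed.

Lemma vsub_scal a b (x : H) : vsub (vscal a x) (vscal b x) = vscal (Cadd a (Copp b)) x.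
Proof.
  unfold Defs.vsub. rewrite vopp_scal, vscal_assoc, vscal_adds.
  do 2 f_equal. apply Cx_ext; simpl; ring.
Qed.

Lemma inner_addl (x y z : H) : inner (vadd x y) z = Cadd (inner x z) (inner y z).
Proof. rewrite <- (vscal_1 x) at 1. rewrite inner_lin. f_equal. apply Cx_ext; simpl; ring. Qed.

Lemma inner_0l (z : H) : inner vzero z = C0.
Proof.
  assert (e := inner_addl vzero vzero z). rewrite vadd_0 in e.
  destruct (inner vzero z) as [a b]. injection e; intros.
  apply Cx_ext; simpl; lra.
Qed.

Lemma inner_scall a (x z : H) : inner (vscal a x) z = Cmul a (inner x z).
Proof.
  rewrite <- (vadd_0r (vscal a x)), inner_lin, inner_0l.
  apply Cx_ext; simpl; ring.
Qed.

Lemma inner_addr (x y z : H) : inner z (vadd x y) = Cadd (inner z x) (inner z y).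
Proof.
  rewrite inner_conj, inner_addl, (inner_conj z x), (inner_conj z y).
  apply Cx_ext; simpl; ring.
Qed.

Lemma inner_scalr a (x z : H) : inner z (vscal a x) = Cmul (Cconj a) (inner z x).
Proof. rewrite inner_conj, inner_scall, (inner_conj z x). apply Cx_ext; simpl; ring. Qed.

Lemma inner_0r (z : H) : inner z vzero = C0.
Proof. rewrite inner_conj, inner_0l. apply Cx_ext; simpl; ring. Qed.

Lemma inner_oppl (x z : H) : inner (vopp x) z = Copp (inner x z).
Proof. rewrite vopp_scal, inner_scall. apply Cx_ext; simpl; ring. Qed.

Lemma inner_oppr (x z : H) : inner z (vopp x) = Copp (inner z x).
Proof. rewrite vopp_scal, inner_scalr. apply Cx_ext; simpl; ring. Qed.

Lemma inner_subl (x y z : H) : inner (vsub x y) z = Cadd (inner x z) (Copp (inner y z)).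
Proof. unfold Defs.vsub. rewrite inner_addl, inner_oppl. reflexivity. Qed.

Lemma inner_subr (x y z : H) : inner z (vsub x y) = Cadd (inner z x) (Copp (inner z y)).
Proof. unfold Defs.vsub. rewrite inner_addr, inner_oppr. reflexivity. Qed.

Lemma inner_self_Im (x : H) : Cim (inner x x) = 0.
Proof.
  assert (e := inner_conj x x). destruct (inner x x) as [a b].
  injection e; intros; simpl; lra.
Qed.

Lemma inner_ext (u u' : H) : (forall x, inner x u = inner x u') -> u = u'.
Proof.
  intro h. apply vsub_eq0, inner_def.
  rewrite inner_subr, h. simpl. ring.
Qed.

Lemma hnorm_ge0 (x : H) : 0 <= nrm x.
Proof. apply sqrt_pos. Qed.

Lemma hnorm_sq (x : H) : nrm x * nrm x = Cre (inner x x).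
Proof. apply sqrt_sqrt, inner_pos. Qed.

Lemma hnorm_zero : nrm (@vzero H) = 0.
Proof. unfold hnorm. rewrite inner_0l. apply sqrt_0. Qed.

Lemma hnorm_eq0 (x : H) : nrm x = 0 -> x = vzero.
Proof. intro e. apply inner_def. rewrite <- hnorm_sq, e; ring. Qed.

Lemma hnorm_gt0 (x : H) : x <> vzero -> 0 < nrm x.
Proof. intro h. destruct (hnorm_ge0 x); auto. exfalso; apply h, hnorm_eq0; auto. Qed.

Lemma inner_scal_self a (x : H) :
  Cre (inner (vscal a x) (vscal a x)) = Cn2 a * Cre (inner x x).
Proof.
  rewrite inner_scall, inner_scalr. pose proof (inner_self_Im x).
  destruct (inner x x) as [p q]; simpl in *; unfold Cn2; subst; ring.
Qed.

Lemma hnorm_scal a (x : H) : nrm (vscal a x) = Cabs a * nrm x.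
Proof. unfold hnorm, Cabs. rewrite inner_scal_self. apply sqrt_mult_alt, Cn2_ge0. Qed.

Lemma hnorm_scalR r (x : H) : nrm (vscal (RC r) x) = Rabs r * nrm x.
Proof.
  rewrite hnorm_scal. f_equal. unfold Cabs, Cn2; simpl.
  rewrite Rmult_0_l, Rplus_0_r. apply sqrt_Rsqr_abs.
Qed.

Lemma hnorm_opp (x : H) : nrm (vopp x) = nrm x.
Proof. rewrite vopp_scal, hnorm_scalR, Rabs_left by lra. ring. Qed.

Lemma hnorm_sub_sym (x y : H) : nrm (vsub x y) = nrm (vsub y x).
Proof. rewrite vsub_opp, hnorm_opp; auto. Qed.

Lemma inner_sub_scal_self (x y : H) (w : Cx) :
  Cre (inner (vsub x (vscal w y)) (vsub x (vscal w y))) =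
  Cre (inner x x) - 2 * Cre (Cmul (Cconj w) (inner x y)) + Cn2 w * Cre (inner y y).
Proof.
  rewrite inner_subl, !inner_subr, inner_scall, !inner_scalr, inner_scall, (inner_conj y x).
  pose proof (inner_self_Im y). destruct (inner y y) as [p q]; destruct (inner x y) as [u v].
  simpl in *; subst; unfold Cn2; ring.
Qed.

Lemma inner_add_self (x y : H) :
  Cre (inner (vadd x y) (vadd x y)) = Cre (inner x x) + 2 * Cre (inner x y) + Cre (inner y y).
Proof. rewrite inner_addl, !inner_addr, (inner_conj y x). simpl. ring. Qed.

(* Expand [|x - w y|^2 >= 0] at [w = <x,y> / |y|^2]. *)
Lemma Cauchy_Schwarz_sq (x y : H) : Cn2 (inner x y) <= Cre (inner x x) * Cre (inner y y).
Proof.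
  destruct (Req_dec (Cre (inner y y)) 0) as [e|ne].
  - apply inner_def in e. subst. rewrite inner_0r, inner_0l. unfold Cn2; simpl; nra.
  - pose proof (inner_pos y). assert (py : 0 < Cre (inner y y)) by lra.
    pose proof (inner_pos (vsub x (vscal (Cmul (RC (/ Cre (inner y y))) (inner x y)) y))) as h.
    rewrite inner_sub_scal_self in h. unfold Cn2 in *.
    destruct (inner x y) as [c1 c2]; simpl in h |- *.
    set (Y := Cre (inner y y)) in *. set (X := Cre (inner x x)) in *.
    replace (X - 2 * ((/ Y * c1 - 0 * c2) * c1 - - (/ Y * c2 + 0 * c1) * c2)
             + ((/ Y * c1 - 0 * c2) * (/ Y * c1 - 0 * c2)
                + (/ Y * c2 + 0 * c1) * (/ Y * c2 + 0 * c1)) * Y)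
      with ((X * Y - (c1 * c1 + c2 * c2)) / Y) in h by (field; lra).
    apply Rmult_le_compat_r with (r := Y) in h; [|lra].
    unfold Rdiv in h. rewrite Rmult_0_l, Rmult_assoc, Rinv_l, Rmult_1_r in h; lra.
Qed.

Lemma Cauchy_Schwarz (x y : H) : Cabs (inner x y) <= nrm x * nrm y.
Proof.
  pose proof (Cauchy_Schwarz_sq x y) as cs. rewrite <- !hnorm_sq, <- Cabs_sq in cs.
  apply sq_le_sq; [|nra]. pose proof (hnorm_ge0 x); pose proof (hnorm_ge0 y); nra.
Qed.

Lemma Re_inner_le (x y : H) : Cre (inner x y) <= nrm x * nrm y.
Proof.
  pose proof (Cauchy_Schwarz x y). pose proof (Re_Im_le_Cabs (inner x y)).
  pose proof (Rle_abs (Cre (inner x y))). lra.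
Qed.

Lemma hnorm_triangle (x y : H) : nrm (vadd x y) <= nrm x + nrm y.
Proof.
  apply sq_le_sq. pose proof (hnorm_ge0 x); pose proof (hnorm_ge0 y); lra.
  rewrite hnorm_sq, inner_add_self, <- !hnorm_sq. pose proof (Re_inner_le x y). nra.
Qed.

Lemma hnorm_triangle_sub (x y w : H) : nrm (vsub x y) <= nrm (vsub x w) + nrm (vsub w y).
Proof. rewrite (vsub_split x y w); apply hnorm_triangle. Qed.

Lemma hnorm_sub_le (x y : H) : nrm (vsub x y) <= nrm x + nrm y.
Proof. unfold Defs.vsub. rewrite <- (hnorm_opp y). apply hnorm_triangle. Qed.

Lemma hnorm_rev_triangle (x y : H) : nrm x - nrm y <= nrm (vsub x y).
Proof. pose proof (hnorm_triangle (vsub x y) y) as tri. rewrite vsub_add in tri. lra. Qed.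

Lemma parallelogram (x y : H) :
  Cre (inner (vadd x y) (vadd x y)) + Cre (inner (vsub x y) (vsub x y)) =
  2 * Cre (inner x x) + 2 * Cre (inner y y).
Proof.
  unfold Defs.vsub. rewrite !inner_add_self, inner_oppr, inner_oppl, inner_oppr.
  simpl. ring.
Qed.

Definition unitv (x : H) := nrm x = 1.

Definition normalize (x : H) : H := vscal (RC (/ nrm x)) x.

Lemma normalize_unit (x : H) : x <> vzero -> unitv (normalize x).
Proof.
  intro h. pose proof (hnorm_gt0 x h). unfold unitv, normalize.
  rewrite hnorm_scalR, Rabs_right by (apply Rle_ge, Rlt_le, Rinv_0_lt_compat; auto).
  field; lra.
Qed.

Lemma unitv_neq0 (x : H) : unitv x -> x <> vzero.
Proof. unfold unitv; intros u e; rewrite e, hnorm_zero in u; lra. Qed.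

End HilbertAlgebra.

Lemma Rsup_spec E : bound E -> (exists x, E x) -> is_lub E (Rsup E).
Proof.
  intros b ne. unfold Rsup. destruct (excluded_middle_informative _) as [h|h].
  - destruct (completeness E (proj1 h) (proj2 h)); simpl; auto.
  - exfalso; auto.
Qed.

Lemma Rsup_ub E x : bound E -> E x -> x <= Rsup E.
Proof. intros b ex. apply (Rsup_spec E b (ex_intro _ x ex)); auto. Qed.

Lemma Rsup_le E b : (exists x, E x) -> (forall x, E x -> x <= b) -> Rsup E <= b.
Proof.
  intros ne h. assert (bd : bound E) by (exists b; intros x; apply h).
  apply (Rsup_spec E bd ne). intros x; apply h.
Qed.

Lemma Rsup_approx E eps : bound E -> (exists x, E x) -> eps > 0 ->
  exists x, E x /\ Rsup E - eps < x.
Proof.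
  intros b ne he. destruct (Rsup_spec E b ne) as [_ l].
  apply NNPP; intro h. assert (Rsup E <= Rsup E - eps); [|lra].
  apply l. intros x ex. apply Rnot_lt_le; intro lt. apply h; eauto.
Qed.

(* Also covers the junk value [Rsup E = 0] of an unbounded [E]. *)
Lemma Rsup_ge0 E x : E x -> 0 <= x -> 0 <= Rsup E.
Proof.
  intros ex hx. destruct (classic (bound E)) as [b|nb].
  - pose proof (Rsup_ub E x b ex). lra.
  - unfold Rsup. destruct (excluded_middle_informative _) as [h|h]; [destruct h; contradiction|lra].
Qed.

Section Operators.
Variable H : HilbertSpace.
Local Notation nrm := (hnorm H).
Local Notation vsub := (vsub H).
Local Notation linear := (linear_op H).

Definition subspace (M : H -> Prop) :=
  M vzero /\ (forall x y, M x -> M y -> M (vadd x y)) /\ (forall a x, M x -> M (vscal a x)).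
Definition invariant (M : H -> Prop) (A : H -> H) := forall x, M x -> M (A x).
Definition nontrivial (M : H -> Prop) := exists x, M x /\ x <> vzero.

Lemma subspace_full : subspace (full H).
Proof. repeat split. Qed.

Lemma subspace_sub M x y : subspace M -> M x -> M y -> M (vsub x y).
Proof. intros [_ [Ma Ms]] Mx My. apply Ma; auto. rewrite vopp_scal. auto. Qed.

Lemma lin_add A x y : linear A -> A (vadd x y) = vadd (A x) (A y).
Proof. intros [h _]; auto. Qed.

Lemma lin_scal A a x : linear A -> A (vscal a x) = vscal a (A x).
Proof. intros [_ h]; auto. Qed.

Lemma lin_zero A : linear A -> A vzero = vzero.
Proof. intros L. pose proof (lin_scal A C0 vzero L) as e. rewrite !vscal_0 in e. exact e. Qed.

Lemma lin_sub A x y : linear A -> A (vsub x y) = vsub (A x) (A y).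
Proof. intros L. unfold Defs.vsub. rewrite lin_add, !vopp_scal, lin_scal; auto. Qed.

Lemma subspace_range_linear B : linear B -> subspace (range H B).
Proof.
  intro LB. repeat split.
  - exists vzero. apply lin_zero; auto.
  - intros x y [x1 <-] [y1 <-]. exists (vadd x1 y1). apply lin_add; auto.
  - intros a x [x1 <-]. exists (vscal a x1). apply lin_scal; auto.
Qed.

Lemma lin_comp A B : linear A -> linear B -> linear (fun x => A (B x)).
Proof. intros LA LB. split; intros; rewrite ?lin_add, ?lin_scal; auto. Qed.

Lemma lin_diff A B : linear A -> linear B -> linear (fun x => vsub (A x) (B x)).
Proof.
  intros LA LB. split; intros.
  - rewrite (lin_add A), (lin_add B), vsub_vadd; auto.
  - rewrite (lin_scal A), (lin_scal B), vscal_vsub; auto.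
Qed.

Lemma shift_linear A z : linear A -> linear (shift H A z).
Proof.
  intro LA. apply lin_diff; auto.
  split; intros; [apply vscal_addv|]. rewrite !vscal_assoc. f_equal. apply Cx_ext; simpl; ring.
Qed.

Lemma shift_invariant M A z : subspace M -> invariant M A -> invariant M (shift H A z).
Proof. intros SM IA x Mx. unfold shift. apply subspace_sub; auto. apply SM; auto. Qed.

Lemma shift_adjoint (M : H -> Prop) (A A' : H -> H) z :
  (forall u v, M u -> M v -> inner (A u) v = inner u (A' v)) ->
  forall u v, M u -> M v -> inner (shift H A z u) v = inner u (shift H A' (Cconj z) v).
Proof.
  intros h u v Mu Mv. unfold shift.
  rewrite inner_subl, inner_subr, inner_scall, inner_scalr, h, Cconj_invol by auto.
  reflexivity.
Qed.

Lemma hnorm_apply_normalize (M : H -> Prop) (A : H -> H) x :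
  (forall a y, M y -> A (vscal a y) = vscal a (A y)) -> M x -> x <> vzero ->
  nrm (A x) = nrm x * nrm (A (normalize H x)).
Proof.
  intros hA Mx nx. pose proof (hnorm_gt0 H x nx). unfold normalize.
  rewrite hA, hnorm_scalR, Rabs_right by (auto; apply Rle_ge, Rlt_le, Rinv_0_lt_compat; auto).
  field; lra.
Qed.

Lemma upper_bound_from_unit (M : H -> Prop) (A : H -> H) c :
  subspace M -> (forall a y, M y -> A (vscal a y) = vscal a (A y)) -> 0 <= c ->
  (forall x, M x -> unitv H x -> nrm (A x) <= c) ->
  forall x, M x -> nrm (A x) <= c * nrm x.
Proof.
  intros SM hA hc hu x Mx. destruct (classic (x = vzero)) as [->|nx].
  - assert (e := hA C0 vzero (proj1 SM)). rewrite !vscal_0 in e.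
    rewrite e, hnorm_zero. lra.
  - rewrite (hnorm_apply_normalize M A x) by auto. pose proof (hnorm_ge0 H x).
    assert (nrm (A (normalize H x)) <= c) by (apply hu; [apply SM | apply normalize_unit]; auto).
    nra.
Qed.

Lemma lower_bound_from_unit (B : H -> H) a : linear B -> 0 <= a ->
  (forall x, unitv H x -> a <= nrm (B x)) -> forall x, a * nrm x <= nrm (B x).
Proof.
  intros LB a0 h x. destruct (classic (x = vzero)) as [->|nx].
  - rewrite hnorm_zero, Rmult_0_r. apply hnorm_ge0.
  - rewrite (hnorm_apply_normalize (full H) B x) by (intros; try apply lin_scal; easy).
    pose proof (h _ (normalize_unit H x nx)). pose proof (hnorm_ge0 H x). nra.
Qed.

Lemma op_bound_weaken (A : H -> H) K K' : K <= K' ->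
  (forall x, nrm (A x) <= K * nrm x) -> forall x, nrm (A x) <= K' * nrm x.
Proof. intros hle h x. pose proof (h x). pose proof (hnorm_ge0 H x). nra. Qed.

Lemma opnorm_on_ge0 (M : H -> Prop) (A : H -> H) : M vzero -> 0 <= opnorm_on H M A.
Proof.
  intro M0. apply (Rsup_ge0 _ (nrm (A vzero))); [|apply hnorm_ge0].
  exists vzero; rewrite hnorm_zero; repeat split; auto; lra.
Qed.

Lemma opnorm_on_le (M : H -> Prop) (A : H -> H) b :
  M vzero -> (forall x, M x -> nrm x <= 1 -> nrm (A x) <= b) -> opnorm_on H M A <= b.
Proof.
  intros M0 h. apply Rsup_le.
  - exists (nrm (A vzero)), vzero. rewrite hnorm_zero. repeat split; auto; lra.
  - intros r [y [My [ny ->]]]. auto.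
Qed.

Lemma opnorm_on_bound (M : H -> Prop) (A : H -> H) :
  subspace M -> (forall a x, M x -> A (vscal a x) = vscal a (A x)) ->
  (exists K, forall x, M x -> nrm (A x) <= K * nrm x) ->
  forall x, M x -> nrm (A x) <= opnorm_on H M A * nrm x.
Proof.
  intros SM hA [K hK]. apply upper_bound_from_unit; auto.
  - apply opnorm_on_ge0, SM.
  - intros x Mx ux. apply Rsup_ub; [|exists x; repeat split; auto; unfold unitv in ux; lra].
    exists (Rabs K). intros r [y [My [ny ->]]]. specialize (hK y My).
    pose proof (hnorm_ge0 H y). pose proof (Rle_abs K). pose proof (Rabs_pos K). nra.
Qed.

End Operators.

Lemma Rinv_margin (K eps : R) : 0 < K -> 0 < eps -> exists d, 0 < d < K /\ / (K - d) < / K + eps.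
Proof.
  intros hK he. assert (q : 0 < 1 + K * eps) by nra.
  set (t := K * K * eps / (1 + K * eps)).
  assert (et : K - t = K / (1 + K * eps)) by (unfold t; field; lra).
  assert (0 < K / (1 + K * eps)) by (apply Rdiv_lt_0_compat; lra).
  assert (tp : 0 < t) by (unfold t; apply Rdiv_lt_0_compat; [apply Rmult_lt_0_compat; nra|lra]).
  exists (t / 2). split; [lra|].
  apply Rlt_le_trans with (/ (K / (1 + K * eps))).
  - apply Rinv_lt_contravar; nra.
  - right. field. lra.
Qed.

(** * The function [Psi] *)

Section BoundedInverse.
Variable H : HilbertSpace.
Local Notation nrm := (hnorm H).
Variables (M : H -> Prop) (B Rv : H -> H).
Hypotheses (SM : subspace H M) (LB : linear_op H B) (IB : invariant H M B)
  (HR : bounded_inverse_on H M B Rv).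

Lemma inverse_homog a x : M x -> Rv (vscal a x) = vscal a (Rv x).
Proof.
  destruct HR as [h1 [h2 [h3 _]]]. intro Mx.
  rewrite <- (h3 x Mx) at 1. rewrite <- lin_scal by auto. apply h2, SM, h1; auto.
Qed.

Lemma inverse_bound y : M y -> nrm (Rv y) <= opnorm_on H M Rv * nrm y.
Proof.
  apply opnorm_on_bound; auto. intros; apply inverse_homog; auto.
  destruct HR as [_ [_ [_ hK]]]; exact hK.
Qed.

Lemma inverse_lower_bound x : M x -> nrm x <= opnorm_on H M Rv * nrm (B x).
Proof.
  intro Mx. destruct HR as [_ [h2 _]]. rewrite <- (h2 x Mx) at 1. apply inverse_bound; auto.
Qed.

Lemma inverse_opnorm_pos : nontrivial H M -> 0 < opnorm_on H M Rv.
Proof.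
  intros [x [Mx nx]]. pose proof (hnorm_gt0 H x nx). pose proof (inverse_lower_bound x Mx).
  pose proof (hnorm_ge0 H (B x)). pose proof (opnorm_on_ge0 H M Rv (proj1 SM)). nra.
Qed.

(* An almost norming vector [y] of [Rv] gives the almost minimizing unit vector [Rv y / |Rv y|] of [B]. *)
Lemma inverse_opnorm_approx eps : nontrivial H M -> eps > 0 ->
  exists x, M x /\ unitv H x /\ nrm (B x) < / opnorm_on H M Rv + eps.
Proof.
  intros nt he. pose proof (inverse_opnorm_pos nt) as Kp. set (K := opnorm_on H M Rv) in *.
  destruct HR as [h1 [_ [h3 _]]].
  destruct (Rinv_margin K eps Kp he) as [d [hd hinv]].
  destruct (Rsup_approx (fun r => exists x, M x /\ nrm x <= 1 /\ r = nrm (Rv x)) d)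
    as [r [[y [My [ny ->]]] hr]]; [| |lra|].
  - exists K. intros r [y [My [ny ->]]]. pose proof (inverse_bound y My) as b. fold K in b. nra.
  - exists (nrm (Rv vzero)), vzero. rewrite hnorm_zero. repeat split; auto; [apply SM|lra].
  - change (K - d < nrm (Rv y)) in hr.
    assert (Rvy : Rv y <> vzero) by (intro e; rewrite e, hnorm_zero in hr; lra).
    exists (normalize H (Rv y)). split; [apply SM, h1; auto|split; [apply normalize_unit; auto|]].
    unfold normalize. rewrite lin_scal, h3, hnorm_scalR by auto.
    pose proof (hnorm_gt0 H _ Rvy) as pRv. pose proof (Rinv_0_lt_compat _ pRv).
    rewrite Rabs_right by lra.
    assert (/ nrm (Rv y) < / (K - d)) by (apply Rinv_lt_contravar; nra).
    nra.
Qed.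

End BoundedInverse.

Section PsiOn.
Variable H : HilbertSpace.
Local Notation nrm := (hnorm H).
Variables (M : H -> Prop) (A : H -> H).
Hypotheses (SM : subspace H M) (LA : linear_op H A) (IA : invariant H M A).

Definition invertible_on (z : Cx) := exists Rv, bounded_inverse_on H M (shift H A z) Rv.

Lemma Psi_on_inverse z : invertible_on z ->
  exists Rv, bounded_inverse_on H M (shift H A z) Rv /\ Psi_on H M A z = / opnorm_on H M Rv.
Proof.
  intro h. unfold Psi_on. destruct (excluded_middle_informative _) as [h'|]; [|contradiction].
  destruct (constructive_indefinite_description _ h') as [Rv HR]. exists Rv; auto.
Qed.

Lemma Psi_on_not_invertible z : ~ invertible_on z -> Psi_on H M A z = 0.
Proof. intro h. unfold Psi_on. destruct (excluded_middle_informative _); [contradiction|auto]. Qed.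

Lemma Psi_on_ge0 z : 0 <= Psi_on H M A z.
Proof.
  destruct (classic (invertible_on z)) as [h|h].
  - destruct (Psi_on_inverse z h) as [Rv [_ ->]].
    destruct (opnorm_on_ge0 H M Rv (proj1 SM)) as [p|e].
    + left; apply Rinv_0_lt_compat; auto.
    + rewrite <- e, Rinv_0; lra.
  - rewrite Psi_on_not_invertible by auto. lra.
Qed.

Lemma Psi_on_trivial z : (forall x, M x -> x = vzero) -> Psi_on H M A z = 0.
Proof.
  intros h. destruct (classic (invertible_on z)) as [hi|hi]; [|apply Psi_on_not_invertible; auto].
  destruct (Psi_on_inverse z hi) as [Rv [HR ->]].
  replace (opnorm_on H M Rv) with 0; [apply Rinv_0|].
  apply Rle_antisym; [apply opnorm_on_ge0, SM|].
  apply opnorm_on_le; [apply SM|]. intros x Mx _.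
  rewrite (h x Mx), (h _ (proj1 HR _ (proj1 SM))), hnorm_zero. lra.
Qed.

Section Nontrivial.
Hypothesis nt : nontrivial H M.

Lemma Psi_on_lower_bound z x : M x -> Psi_on H M A z * nrm x <= nrm (shift H A z x).
Proof.
  intro Mx. destruct (classic (invertible_on z)) as [h|h].
  - destruct (Psi_on_inverse z h) as [Rv [HR ->]].
    pose proof (inverse_opnorm_pos H M _ Rv SM (shift_linear H A z LA) (shift_invariant H M A z SM IA) HR nt).
    pose proof (inverse_lower_bound H M _ Rv SM (shift_linear H A z LA) (shift_invariant H M A z SM IA) HR x Mx).
    apply (Rmult_le_reg_l (opnorm_on H M Rv)); auto.
    rewrite <- Rmult_assoc, Rinv_r; lra.
  - rewrite Psi_on_not_invertible, Rmult_0_l by auto. apply hnorm_ge0.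
Qed.

Lemma Psi_on_approx z eps : invertible_on z -> eps > 0 ->
  exists x, M x /\ unitv H x /\ nrm (shift H A z x) < Psi_on H M A z + eps.
Proof.
  intros h he. destruct (Psi_on_inverse z h) as [Rv [HR ->]].
  exact (inverse_opnorm_approx H M _ Rv SM (shift_linear H A z LA) (shift_invariant H M A z SM IA) HR eps nt he).
Qed.

Lemma Psi_on_ge z c : invertible_on z -> 0 < c ->
  (forall x, M x -> c * nrm x <= nrm (shift H A z x)) -> c <= Psi_on H M A z.
Proof.
  intros h cp hc. destruct (Psi_on_inverse z h) as [Rv [HR ->]]. pose proof HR as [h1 [_ [h3 _]]].
  pose proof (inverse_opnorm_pos H M _ Rv SM (shift_linear H A z LA) (shift_invariant H M A z SM IA) HR nt).
  rewrite <- (Rinv_inv c). apply Rinv_le_contravar; auto.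
  apply opnorm_on_le; [apply SM|]. intros y My ny. specialize (hc (Rv y) (h1 y My)).
  rewrite h3 in hc by auto. apply (Rmult_le_reg_l c); auto. rewrite Rinv_r by lra. nra.
Qed.

End Nontrivial.
End PsiOn.

Section Adjoints.
Variable H : HilbertSpace.
Local Notation nrm := (hnorm H).

(* [|v|^2 = <B (Rv v), v> = <Rv v, B' v> <= K |v| |B' v|]. *)
Lemma adjoint_lower_bound (M : H -> Prop) (B Rv B' : H -> H) K : 0 <= K ->
  (forall y, M y -> M (Rv y) /\ B (Rv y) = y) -> (forall y, M y -> nrm (Rv y) <= K * nrm y) ->
  (forall u v, M u -> M v -> inner (B u) v = inner u (B' v)) ->
  forall v, M v -> nrm v <= K * nrm (B' v).
Proof.
  intros K0 hR hK hadj v Mv. destruct (hR v Mv) as [MR e].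
  pose proof (hnorm_ge0 H v). pose proof (hnorm_ge0 H (B' v)). pose proof (hK v Mv).
  pose proof (hnorm_ge0 H (Rv v)).
  destruct (Req_dec (nrm v) 0) as [z|nz]; [rewrite z in *; nra|].
  assert (hv : nrm v * nrm v = Cre (inner (B (Rv v)) v)) by (rewrite e; apply hnorm_sq).
  rewrite hadj in hv by auto. pose proof (Re_inner_le H (Rv v) (B' v)).
  assert (nrm v * nrm v <= K * nrm v * nrm (B' v)) by nra.
  apply (Rmult_le_reg_l (nrm v)); nra.
Qed.

Lemma Psi_on_adjoint_lower_bound (M : H -> Prop) (A A' : H -> H) z :
  subspace H M -> linear_op H A -> invariant H M A -> nontrivial H M ->
  (forall u v, M u -> M v -> inner (A u) v = inner u (A' v)) ->
  forall y, M y -> Psi_on H M A z * nrm y <= nrm (shift H A' (Cconj z) y).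
Proof.
  intros SM LA IA nt adj y My. destruct (classic (invertible_on H M A z)) as [h|h].
  - destruct (Psi_on_inverse H M A z h) as [Rv [HR ->]]. pose proof HR as [h1 [_ [h3 _]]].
    pose proof (inverse_opnorm_pos H M _ Rv SM (shift_linear H A z LA) (shift_invariant H M A z SM IA) HR nt) as Kp.
    pose proof (adjoint_lower_bound M (shift H A z) Rv (shift H A' (Cconj z)) (opnorm_on H M Rv) (Rlt_le _ _ Kp)
      (fun y My => conj (h1 y My) (h3 y My)) (inverse_bound H M _ Rv SM (shift_linear H A z LA) HR)
      (shift_adjoint H M A A' z adj) y My).
    apply (Rmult_le_reg_l (opnorm_on H M Rv)); auto.
    rewrite <- Rmult_assoc, Rinv_r; lra.
  - rewrite Psi_on_not_invertible, Rmult_0_l by auto. apply hnorm_ge0.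
Qed.

End Adjoints.

(** * Finite dimension: injective operators are invertible *)

Fixpoint csum (n : nat) (f : nat -> Cx) : Cx :=
  match n with O => C0 | S n => Cadd (csum n f) (f n) end.

Definition skip (p i : nat) : nat := if Nat.ltb i p then i else S i.
Definition unskip (p j : nat) : nat := if Nat.ltb j p then j else pred j.

Lemma skip_neq p i : skip p i <> p.
Proof. unfold skip. destruct (Nat.ltb_spec i p); lia. Qed.

Lemma unskip_skip p i : unskip p (skip p i) = i.
Proof.
  unfold skip, unskip. destruct (Nat.ltb_spec i p).
  - destruct (Nat.ltb_spec i p); lia.
  - destruct (Nat.ltb_spec (S i) p); lia.
Qed.

Lemma skip_lt p i m : (i < m)%nat -> (skip p i < S m)%nat.
Proof. unfold skip. destruct (Nat.ltb_spec i p); lia. Qed.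

Section FiniteSums.
Variable H : HilbertSpace.
Local Notation vsub := (vsub H).

Fixpoint vsum (n : nat) (f : nat -> H) : H :=
  match n with O => vzero | S n => vadd (vsum n f) (f n) end.

Lemma fold_right_vsum (c : nat -> Cx) (e : nat -> H) k :
  fold_right (fun i acc => vadd (vscal (c i) (e i)) acc) vzero (seq 0 k) =
  vsum k (fun i => vscal (c i) (e i)).
Proof.
  assert (gen : forall l x, fold_right (fun i acc => vadd (vscal (c i) (e i)) acc) x l =
    vadd (fold_right (fun i acc => vadd (vscal (c i) (e i)) acc) vzero l) x).
  { induction l; intro x; simpl; [rewrite vadd_0; auto|rewrite IHl, vadd_assoc; auto]. }
  induction k; auto. rewrite seq_S, fold_right_app, gen, IHk. simpl. rewrite vadd_0r; auto.
Qed.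

Lemma vsum_ext n f g : (forall i, (i < n)%nat -> f i = g i) -> vsum n f = vsum n g.
Proof. induction n; intros h; simpl; auto. rewrite IHn, h; auto. Qed.

Lemma vsum_zero n f : (forall i, (i < n)%nat -> f i = vzero) -> vsum n f = vzero.
Proof. induction n; intros h; simpl; auto. rewrite IHn, h, vadd_0; auto. Qed.

Lemma vsum_scal n a f : vsum n (fun i => vscal a (f i)) = vscal a (vsum n f).
Proof. induction n; simpl; [rewrite vscal_zero; auto|]. rewrite IHn, vscal_addv; auto. Qed.

Lemma vsum_sub n f g : vsum n (fun i => vsub (f i) (g i)) = vsub (vsum n f) (vsum n g).
Proof.
  induction n; simpl; [rewrite vsub_0r; auto|]. rewrite IHn, vsub_vadd; auto.
Qed.

Lemma vsum_const n f (w : H) : vsum n (fun i => vscal (f i) w) = vscal (csum n f) w.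
Proof. induction n; simpl; [rewrite vscal_0; auto|]. rewrite IHn, vscal_adds; auto. Qed.

Lemma vsum_lin A n f : linear_op H A -> A (vsum n f) = vsum n (fun i => A (f i)).
Proof. intro L. induction n; simpl; [apply lin_zero; auto|]. rewrite lin_add, IHn; auto. Qed.

Lemma vsum_shift n f : vsum (S n) f = vadd (f O) (vsum n (fun i => f (S i))).
Proof.
  induction n; simpl; [rewrite vadd_0, vadd_0r; auto|].
  simpl in IHn. rewrite IHn, vadd_assoc; auto.
Qed.

Lemma vsum_skip m p f : (p < S m)%nat ->
  vsum (S m) f = vadd (f p) (vsum m (fun i => f (skip p i))).
Proof.
  revert p. induction m; intros p hp.
  - replace p with O by lia. simpl. rewrite vadd_0, vadd_0r; auto.
  - change (vsum (S (S m)) f) with (vadd (vsum (S m) f) (f (S m))).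
    destruct (Nat.eq_dec p (S m)) as [->|ne].
    + rewrite vadd_comm. f_equal. apply vsum_ext. intros i hi.
      unfold skip. destruct (Nat.ltb_spec i (S m)); auto; lia.
    + rewrite (IHm p) by lia. simpl. rewrite vadd_assoc. do 2 f_equal.
      unfold skip. destruct (Nat.ltb_spec m p); auto; lia.
Qed.

End FiniteSums.

Section Dependence.
Variable H : HilbertSpace.
Local Notation vsub := (vsub H).
Local Notation vsum := (vsum H).

Definition span (k : nat) (e : nat -> H) (y : H) :=
  exists c, y = vsum k (fun i => vscal (c i) (e i)).

Definition lin_dependent (m : nat) (u : nat -> H) :=
  exists d, (exists i, (i < m)%nat /\ d i <> C0) /\ vsum m (fun i => vscal (d i) (u i)) = vzero.

Lemma span_coeffs k e m u : (forall i, (i < m)%nat -> span k e (u i)) ->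
  exists a, forall i, (i < m)%nat -> u i = vsum k (fun j => vscal (a i j) (e j)).
Proof.
  intro hs.
  assert (hc : forall i, exists c, (i < m)%nat -> u i = vsum k (fun j => vscal (c j) (e j))).
  { intro i. destruct (Nat.ltb_spec i m) as [l|l].
    - destruct (hs i l) as [c hc]. exists c; auto.
    - exists (fun _ => C0); intros; lia. }
  exists (fun i => proj1_sig (constructive_indefinite_description _ (hc i))).
  intros i hi. destruct (constructive_indefinite_description _ (hc i)); simpl; auto.
Qed.

(* Gaussian elimination of the last coordinate. *)
Lemma span_eliminate k e (a b : nat -> Cx) : a k <> C0 ->
  span k e (vsub (vsum (S k) (fun j => vscal (b j) (e j)))
                 (vscal (Cmul (b k) (Cinv (a k))) (vsum (S k) (fun j => vscal (a j) (e j))))).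
Proof.
  intro ak. set (r := Cmul (b k) (Cinv (a k))).
  exists (fun j => Cadd (b j) (Copp (Cmul r (a j)))).
  rewrite <- vsum_scal. simpl. rewrite vsub_vadd, vscal_assoc, vsub_scal.
  replace (Cadd (b k) (Copp (Cmul r (a k)))) with C0.
  - rewrite vscal_0, vadd_0r, <- vsum_sub. apply vsum_ext. intros j _.
    rewrite vscal_assoc, vsub_scal. reflexivity.
  - replace (Cmul r (a k)) with (Cmul (b k) (Cmul (Cinv (a k)) (a k)))
      by (unfold r; apply Cx_ext; simpl; ring).
    rewrite Cmul_Vl by auto. apply Cx_ext; simpl; ring.
Qed.

Lemma lin_dependent_eliminated m p u r : (p < S m)%nat ->
  lin_dependent m (fun i => vsub (u (skip p i)) (vscal (r (skip p i)) (u p))) ->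
  lin_dependent (S m) u.
Proof.
  intros hp [d' [[i0 [hi0 di0]] hd']].
  set (c := csum m (fun i => Cmul (d' i) (r (skip p i)))).
  exists (fun j => if Nat.eqb j p then Copp c else d' (unskip p j)). split.
  - exists (skip p i0). split; [apply skip_lt; auto|].
    destruct (Nat.eqb_spec (skip p i0) p) as [e|_]; [exfalso; eapply skip_neq; eauto|].
    rewrite unskip_skip; auto.
  - rewrite (vsum_skip H m p) by auto. rewrite Nat.eqb_refl.
    erewrite vsum_ext.
    2:{ intros i hi. destruct (Nat.eqb_spec (skip p i) p); [exfalso; eapply skip_neq; eauto|].
        rewrite unskip_skip. reflexivity. }
    erewrite vsum_ext in hd'.
    2:{ intros i hi. rewrite vscal_vsub, vscal_assoc. reflexivity. }
    rewrite vsum_sub, vsum_const in hd'. fold c in hd'. apply vsub_eq0 in hd'.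
    rewrite hd', <- vscal_adds, <- (vscal_0 H (u p)). f_equal. apply Cx_ext; simpl; ring.
Qed.

Lemma span_lin_dependent k e : forall m u, (k < m)%nat ->
  (forall i, (i < m)%nat -> span k e (u i)) -> lin_dependent m u.
Proof.
  induction k; intros m u hk hs.
  - exists (fun i => if Nat.eqb i 0 then C1 else C0). split.
    + exists O; split; [lia|]. simpl. intro e0. injection e0; lra.
    + apply vsum_zero. intros i hi. destruct (hs i hi) as [c ->]. apply vscal_zero.
  - destruct (span_coeffs (S k) e m u hs) as [a ha].
    destruct (classic (exists p, (p < m)%nat /\ a p k <> C0)) as [[p [hp ap]]|np].
    + destruct m as [|m]; [lia|].
      set (r := fun i => Cmul (a i k) (Cinv (a p k))).
      apply (lin_dependent_eliminated m p u r hp), IHk; [lia|].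
      intros i hi. rewrite (ha _ (skip_lt p i m hi)), (ha p hp). apply span_eliminate; auto.
    + apply IHk; [lia|]. intros i hi. exists (a i). rewrite (ha i hi). simpl.
      assert (aik : a i k = C0) by (apply NNPP; intro; apply np; exists i; auto).
      rewrite aik, vscal_0, vadd_0r; auto.
Qed.

End Dependence.

Section FiniteDimensionalInverse.
Variable H : HilbertSpace.
Local Notation nrm := (hnorm H).
Local Notation vsub := (vsub H).
Local Notation vsum := (vsum H).
Variables (M : H -> Prop) (B : H -> H).
Hypotheses (SM : subspace H M) (LB : linear_op H B) (IB : invariant H M B).

(* If [v] is not in [B M], a relation [sum_i d_i B^i v = 0] forces [d_0 = 0], and then
   injectivity strips one power of [B]. *)
Lemma powers_independent v : (forall x, M x -> B x = vzero -> x = vzero) ->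
  M v -> (forall x, M x -> B x <> v) ->
  forall n d, vsum n (fun i => vscal (d i) (Nat.iter i B v)) = vzero ->
  forall i, (i < n)%nat -> d i = C0.
Proof.
  intros inj Mv nr. destruct SM as [M0 [Ma Ms]].
  assert (Mp : forall i, M (Nat.iter i B v)) by (induction i; simpl; auto).
  induction n; intros d hd i hi; [lia|].
  rewrite vsum_shift in hd. simpl in hd.
  set (w := vsum n (fun i => vscal (d (S i)) (Nat.iter i B v))).
  assert (ew : vsum n (fun i => vscal (d (S i)) (B (Nat.iter i B v))) = B w).
  { unfold w. rewrite vsum_lin by auto. apply vsum_ext; intros; rewrite lin_scal; auto. }
  rewrite ew in hd.
  assert (Mw : M w) by (unfold w; clear -Ma Ms M0 Mp; induction n; simpl; auto).
  destruct (classic (d O = C0)) as [d0|d0].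
  - rewrite d0, vscal_0, vadd_0 in hd. apply inj in hd; auto.
    destruct i; auto. apply (IHn (fun j => d (S j))); auto. lia.
  - exfalso. apply (nr (vscal (Cmul (RC (-1)) (Cinv (d O))) w)); [apply Ms; auto|].
    rewrite lin_scal, <- vscal_assoc by auto.
    assert (Bw : B w = vopp (vscal (d O) v)).
    { apply (vadd_cancel H (vscal (d O) v)). rewrite hd, vadd_oppr; auto. }
    rewrite Bw, vopp_scal, !vscal_assoc. transitivity (vscal C1 v); [f_equal|apply vscal_1].
    rewrite <- (Cmul_Vl _ d0). apply Cx_ext; simpl; ring.
Qed.

Lemma injective_surjective_fd k (e : nat -> H) :
  (forall y, M y -> span H k e y) -> (forall x, M x -> B x = vzero -> x = vzero) ->
  forall v, M v -> exists x, M x /\ B x = v.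
Proof.
  intros sp inj v Mv. apply NNPP; intro nr.
  assert (nr' : forall x, M x -> B x <> v) by (intros x Mx ee; apply nr; exists x; auto).
  assert (Mp : forall i, M (Nat.iter i B v)) by (induction i; simpl; auto).
  destruct (span_lin_dependent H k e (S k) (fun i => Nat.iter i B v)) as [d [[i [hi di]] hd]];
    auto.
  apply di. eapply powers_independent; eauto.
Qed.

Lemma inverse_of_lower_bound c : 0 < c ->
  (forall x, M x -> c * nrm x <= nrm (B x)) -> (forall v, M v -> exists x, M x /\ B x = v) ->
  exists Rv, bounded_inverse_on H M B Rv /\ forall y, M y -> nrm (Rv y) <= / c * nrm y.
Proof.
  intros cpos low sur.
  assert (hc : forall y, exists x, M y -> M x /\ B x = y).
  { intro y. destruct (classic (M y)) as [My|nMy].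
    - destruct (sur y My) as [x hx]; exists x; auto.
    - exists vzero; tauto. }
  set (Rv := fun y => proj1_sig (constructive_indefinite_description _ (hc y))).
  assert (hR : forall y, M y -> M (Rv y) /\ B (Rv y) = y).
  { intros y My. unfold Rv. destruct (constructive_indefinite_description _ (hc y)); simpl; auto. }
  assert (inj : forall x x', M x -> M x' -> B x = B x' -> x = x').
  { intros x x' Mx Mx' e. apply vsub_eq0, hnorm_eq0.
    pose proof (low _ (subspace_sub H M x x' SM Mx Mx')) as l.
    rewrite lin_sub, e, vsub_self, hnorm_zero in l by auto.
    pose proof (hnorm_ge0 H (vsub x x')). nra. }
  assert (bnd : forall y, M y -> nrm (Rv y) <= / c * nrm y).
  { intros y My. destruct (hR y My) as [h1 h2]. specialize (low _ h1). rewrite h2 in low.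
    apply (Rmult_le_reg_l c); auto. rewrite <- Rmult_assoc, Rinv_r by lra. lra. }
  exists Rv. repeat split; auto.
  - intros y My; apply hR; auto.
  - intros x Mx. apply inj; auto; apply hR; auto.
  - intros y My; apply hR; auto.
  - exists (/ c). exact bnd.
Qed.

Lemma lower_bound_inverse_fd k (e : nat -> H) c :
  (forall y, M y -> span H k e y) -> 0 < c -> (forall x, M x -> c * nrm x <= nrm (B x)) ->
  exists Rv, bounded_inverse_on H M B Rv /\ forall y, M y -> nrm (Rv y) <= / c * nrm y.
Proof.
  intros sp cp low. apply inverse_of_lower_bound; auto.
  apply (injective_surjective_fd k e sp). intros x Mx e0.
  apply hnorm_eq0. pose proof (low x Mx) as l. rewrite e0, hnorm_zero in l.
  pose proof (hnorm_ge0 H x). nra.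
Qed.

End FiniteDimensionalInverse.

Section FiniteDimensionalPsi.
Variable H : HilbertSpace.
Local Notation nrm := (hnorm H).
Variables (M : H -> Prop) (k : nat) (e : nat -> H).
Hypotheses (SM : subspace H M) (sp : forall y, M y -> span H k e y).

Lemma Psi_on_ge_fd (A : H -> H) z c : linear_op H A -> invariant H M A -> nontrivial H M ->
  0 < c -> (forall x, M x -> c * nrm x <= nrm (shift H A z x)) -> c <= Psi_on H M A z.
Proof.
  intros LA IA nt cp low. apply Psi_on_ge; auto.
  destruct (lower_bound_inverse_fd H M (shift H A z) SM (shift_linear H A z LA)
    (shift_invariant H M A z SM IA) k e c sp cp low) as [Rv [HR _]].
  exists Rv; exact HR.
Qed.

(* Through the inverse, which exists in finite dimension. *)
Lemma adjoint_lower_bound_fd (B B' : H -> H) c : linear_op H B -> invariant H M B ->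
  0 < c -> (forall y, M y -> c * nrm y <= nrm (B y)) ->
  (forall u v, M u -> M v -> inner (B u) v = inner u (B' v)) ->
  forall v, M v -> c * nrm v <= nrm (B' v).
Proof.
  intros LB IB cp low adj v Mv.
  destruct (lower_bound_inverse_fd H M B SM LB IB k e c sp cp low) as [Rv [[h1 [_ [h3 _]]] bR]].
  pose proof (adjoint_lower_bound H M B Rv B' (/ c) (Rlt_le _ _ (Rinv_0_lt_compat _ cp))
    (fun y My => conj (h1 y My) (h3 y My)) bR adj v Mv).
  apply (Rmult_le_reg_l (/ c)); [apply Rinv_0_lt_compat; auto|].
  rewrite <- Rmult_assoc, Rinv_l by lra. lra.
Qed.

End FiniteDimensionalPsi.

Lemma inv_INR_succ_lt (eps : R) : eps > 0 ->
  exists N : nat, forall n, (n >= N)%nat -> / (INR n + 1) < eps.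
Proof.
  intro he. destruct (archimed (/ eps)) as [h1 _]. pose proof (Rinv_0_lt_compat eps he).
  destruct (Z.le_gt_cases (up (/ eps)) 0) as [l|l].
  - apply IZR_le in l. lra.
  - exists (Z.to_nat (up (/ eps))). intros n hn. apply le_INR in hn.
    rewrite INR_IZR_INZ, Z2Nat.id in hn by lia.
    rewrite <- (Rinv_inv eps). apply Rinv_lt_contravar; nra.
Qed.

Lemma inv_INR_succ_pos (n : nat) : 0 < / (INR n + 1).
Proof. apply Rinv_0_lt_compat. pose proof (pos_INR n); lra. Qed.

(** * Complete spaces: nearest points, closed ranges, adjoints *)

Section Complete.
Variable H : HilbertSpace.
Local Notation nrm := (hnorm H).
Local Notation vsub := (vsub H).
Hypothesis comp : complete_space H.

Definition closed_set (C : H -> Prop) := forall (u : nat -> H) l, (forall n, C (u n)) ->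
  Un_cv (fun n => nrm (vsub (u n) l)) 0 -> C l.

Lemma Un_cv_hnorm (u : nat -> H) l eps : Un_cv (fun n => nrm (vsub (u n) l)) 0 -> eps > 0 ->
  exists N, forall n, (n >= N)%nat -> nrm (vsub (u n) l) < eps.
Proof.
  intros cv he. destruct (cv eps he) as [N hN]. exists N. intros n hn.
  specialize (hN n hn). unfold Rdist in hN.
  rewrite Rminus_0_r, Rabs_right in hN by (apply Rle_ge, hnorm_ge0). exact hN.
Qed.

Section NearestPoint.
Variables (C : H -> Prop) (w : H).
Hypotheses (SC : subspace H C) (CC : closed_set C).

Lemma minimizing_sequence : exists d cs, 0 <= d /\ (forall c, C c -> d <= nrm (vsub w c)) /\
  forall n : nat, C (cs n) /\ nrm (vsub w (cs n)) < d + / (INR n + 1).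
Proof.
  set (E := fun r => exists c, C c /\ r = - nrm (vsub w c)).
  assert (bE : bound E) by (exists 0; intros r [c [_ ->]]; pose proof (hnorm_ge0 H (vsub w c)); lra).
  assert (nE : exists r, E r) by (exists (- nrm (vsub w vzero)), vzero; split; auto; apply SC).
  assert (dlow : forall c, C c -> - Rsup E <= nrm (vsub w c)).
  { intros c Cc. pose proof (Rsup_ub E _ bE (ex_intro _ c (conj Cc eq_refl))). lra. }
  assert (hseq : forall n : nat, exists c, C c /\ nrm (vsub w c) < - Rsup E + / (INR n + 1)).
  { intro n. destruct (Rsup_approx E (/ (INR n + 1)) bE nE) as [r [[c [Cc ->]] hr]].
    - apply inv_INR_succ_pos.
    - exists c; split; auto; lra. }
  exists (- Rsup E), (fun n => proj1_sig (constructive_indefinite_description _ (hseq n))).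
  split; [|split; auto].
  - assert (Rsup E <= 0); [|lra]. apply Rsup_le; auto.
    intros r [c [_ ->]]. pose proof (hnorm_ge0 H (vsub w c)); lra.
  - intro n. destruct (constructive_indefinite_description _ (hseq n)); auto.
Qed.

(* Parallelogram law for [w - y] and [w - x], whose half sum [w - (x + y) / 2] is at
   distance at least [d] from [w] by convexity. *)
Lemma parallelogram_defect d x y : (forall c, C c -> d <= nrm (vsub w c)) -> 0 <= d -> C x -> C y ->
  nrm (vsub x y) * nrm (vsub x y) <=
  2 * (nrm (vsub w x) * nrm (vsub w x)) + 2 * (nrm (vsub w y) * nrm (vsub w y)) - 4 * (d * d).
Proof.
  intros dlow d0 Cx Cy. destruct SC as [_ [Ca Cs]].
  pose proof (parallelogram H (vsub w y) (vsub w x)) as e.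
  replace (vsub (vsub w y) (vsub w x)) with (vsub x y) in e
    by (unfold Defs.vsub; rewrite vopp_vadd, vopp_invol, vadd_ACA, vadd_oppr, vadd_0, vadd_comm; auto).
  replace (vadd (vsub w y) (vsub w x))
    with (vscal (RC 2) (vsub w (vscal (RC (/ 2)) (vadd x y)))) in e.
  - rewrite inner_scal_self, <- !hnorm_sq in e. unfold Cn2 in e; simpl in e.
    pose proof (dlow _ (Cs (RC (/ 2)) _ (Ca _ _ Cx Cy))).
    pose proof (hnorm_ge0 H (vsub w (vscal (RC (/ 2)) (vadd x y)))). nra.
  - rewrite vscal_vsub, vscal_assoc.
    replace (Cmul (RC 2) (RC (/ 2))) with C1 by (apply Cx_ext; simpl; field).
    replace (RC 2) with (Cadd C1 C1) by (apply Cx_ext; simpl; ring).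
    rewrite vscal_adds, !vscal_1, vsub_vadd, vadd_comm. reflexivity.
Qed.

Lemma nearest_point : exists p, C p /\ forall c, C c -> nrm (vsub w p) <= nrm (vsub w c).
Proof.
  destruct minimizing_sequence as [d [cs [d0 [dlow hcs]]]].
  assert (cauchy : forall eps, eps > 0 -> exists N, forall n m, (n >= N)%nat -> (m >= N)%nat ->
    nrm (vsub (cs n) (cs m)) < eps).
  { intros eps he. set (t := eps * eps / (8 * (d + 1))).
    assert (tpos : t > 0) by (unfold t; apply Rdiv_lt_0_compat; nra).
    destruct (inv_INR_succ_lt (Rmin t 1)) as [N hN]; [apply Rmin_pos; lra|].
    exists N. intros n m hn hm.
    pose proof (hN n hn); pose proof (hN m hm); pose proof (Rmin_l t 1); pose proof (Rmin_r t 1).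
    pose proof (inv_INR_succ_pos n); pose proof (inv_INR_succ_pos m).
    destruct (hcs n) as [Cn hn'], (hcs m) as [Cm hm'].
    pose proof (parallelogram_defect d _ _ dlow d0 Cn Cm).
    pose proof (hnorm_ge0 H (vsub w (cs n))); pose proof (hnorm_ge0 H (vsub w (cs m))).
    pose proof (hnorm_ge0 H (vsub (cs n) (cs m))).
    set (a := / (INR n + 1)) in *. set (b := / (INR m + 1)) in *.
    assert (8 * (d + 1) * t = eps * eps) by (unfold t; field; lra).
    assert (nrm (vsub w (cs n)) * nrm (vsub w (cs n)) <= (d + a) * (d + a)) by nra.
    assert (nrm (vsub w (cs m)) * nrm (vsub w (cs m)) <= (d + b) * (d + b)) by nra.
    assert (a < t /\ b < t /\ a < 1 /\ b < 1) as [ha [hb [a1 b1]]] by lra.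
    assert (a * a < t /\ b * b < t) as [aa bb] by (split; nra).
    assert (4 * d * (a + b) <= 8 * d * t) by nra.
    nra. }
  destruct (comp cs cauchy) as [p hp].
  exists p. split; [apply (CC cs); auto; intro n; apply hcs|].
  intros c Cc. apply Rle_trans with d; auto.
  apply Rnot_lt_le. intro l. set (g := nrm (vsub w p) - d).
  destruct (inv_INR_succ_lt (g / 2)) as [N1 hN1]; [unfold g; lra|].
  destruct (Un_cv_hnorm cs p (g / 2) hp) as [N2 hN2]; [unfold g; lra|].
  set (n := max N1 N2). specialize (hN1 n (Nat.le_max_l _ _)). specialize (hN2 n (Nat.le_max_r _ _)).
  pose proof (hnorm_triangle_sub H w p (cs n)).
  destruct (hcs n) as [_ hc]. unfold g in *. lra.
Qed.

(* Minimize [|v - a c|^2 = |v|^2 - 2 Re (conj a <v, c>) + |a|^2 |c|^2] along [a = lam <v, c>]. *)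
Lemma nearest_point_orthogonal p : C p -> (forall c, C c -> nrm (vsub w p) <= nrm (vsub w c)) ->
  forall c, C c -> inner c (vsub w p) = C0.
Proof.
  intros Cp near c Cc. destruct SC as [_ [Ca Cs]]. set (v := vsub w p).
  assert (key : forall a : Cx, Cre (inner v v) <= Cre (inner (vsub v (vscal a c)) (vsub v (vscal a c)))).
  { intro a. rewrite <- !hnorm_sq.
    replace (vsub v (vscal a c)) with (vsub w (vadd p (vscal a c)))
      by (unfold v, Defs.vsub; rewrite vopp_vadd, vadd_assoc; auto).
    pose proof (near _ (Ca _ _ Cp (Cs a c Cc))) as hn. fold v in hn. pose proof (hnorm_ge0 H v). nra. }
  set (q := inner v c). rewrite inner_conj. fold q.
  replace q with C0; [apply Cx_ext; simpl; ring|]. symmetry. apply Cn2_eq0.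
  set (lam := / (Cre (inner c c) + 1)). pose proof (inner_pos c).
  assert (lp : 0 < lam) by (unfold lam; apply Rinv_0_lt_compat; lra).
  specialize (key (Cmul (RC lam) q)). rewrite inner_sub_scal_self in key. fold q in key.
  assert (e1 : Cre (Cmul (Cconj (Cmul (RC lam) q)) q) = lam * Cn2 q)
    by (destruct q; unfold Cn2; simpl; ring).
  assert (e2 : Cn2 (Cmul (RC lam) q) = lam * lam * Cn2 q) by (destruct q; unfold Cn2; simpl; ring).
  rewrite e1, e2 in key. pose proof (Cn2_ge0 q) as q0.
  assert (lam * (Cre (inner c c) + 1) = 1) by (unfold lam; field; lra).
  assert (lam * Cre (inner c c) < 1) by nra.
  destruct q0 as [qp|]; auto.
  assert (0 < (lam * Cn2 q) * (2 - lam * Cre (inner c c))) by (apply Rmult_lt_0_compat; nra).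
  lra.
Qed.

Lemma orthogonal_vector : ~ C w -> exists v, v <> vzero /\ forall c, C c -> inner c v = C0.
Proof.
  intro nw. destruct nearest_point as [p [Cp near]]. exists (vsub w p). split.
  - intro e. apply nw. apply vsub_eq0 in e. subst; auto.
  - apply nearest_point_orthogonal; auto.
Qed.

End NearestPoint.
End Complete.

Section CompleteOperators.
Variable H : HilbertSpace.
Local Notation nrm := (hnorm H).
Local Notation vsub := (vsub H).
Hypothesis comp : complete_space H.

Lemma limit_unique (u : nat -> H) l l' :
  Un_cv (fun n => nrm (vsub (u n) l)) 0 -> Un_cv (fun n => nrm (vsub (u n) l')) 0 -> l = l'.
Proof.
  intros cv cv'. apply vsub_eq0, hnorm_eq0. apply Rle_antisym; [|apply hnorm_ge0].
  apply Rnot_lt_le; intro g. set (e := nrm (vsub l l')) in *.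
  destruct (Un_cv_hnorm H u l (e / 2) cv) as [N1 h1]; [lra|].
  destruct (Un_cv_hnorm H u l' (e / 2) cv') as [N2 h2]; [lra|].
  specialize (h1 (max N1 N2) (Nat.le_max_l _ _)). specialize (h2 (max N1 N2) (Nat.le_max_r _ _)).
  pose proof (hnorm_triangle_sub H l l' (u (max N1 N2))) as tri.
  rewrite (hnorm_sub_sym H l (u _)) in tri. fold e in tri. lra.
Qed.

Lemma bounded_op_limit (B : H -> H) K (xs : nat -> H) x : linear_op H B ->
  (forall x, nrm (B x) <= K * nrm x) -> Un_cv (fun n => nrm (vsub (xs n) x)) 0 ->
  Un_cv (fun n => nrm (vsub (B (xs n)) (B x))) 0.
Proof.
  intros LB bd cv eps he. pose proof (Rabs_pos K).
  destruct (Un_cv_hnorm H xs x (eps / (Rabs K + 1)) cv) as [N hN].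
  { apply Rlt_gt, Rdiv_lt_0_compat; lra. }
  exists N. intros n hn. specialize (hN n hn). unfold Rdist.
  rewrite Rminus_0_r, Rabs_right, <- lin_sub by (auto; apply Rle_ge, hnorm_ge0).
  pose proof (bd (vsub (xs n) x)). pose proof (Rle_abs K). pose proof (hnorm_ge0 H (vsub (xs n) x)).
  apply Rle_lt_trans with ((Rabs K + 1) * nrm (vsub (xs n) x)); [nra|].
  apply (Rmult_lt_compat_l (Rabs K + 1)) in hN; [|lra].
  replace ((Rabs K + 1) * (eps / (Rabs K + 1))) with eps in hN by (field; lra). exact hN.
Qed.

Lemma range_closed (B : H -> H) a K : linear_op H B -> 0 < a ->
  (forall x, a * nrm x <= nrm (B x)) -> (forall x, nrm (B x) <= K * nrm x) ->
  closed_set H (range H B).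
Proof.
  intros LB ap low bd u l hu cv.
  set (xs := fun n => proj1_sig (constructive_indefinite_description _ (hu n))).
  assert (hx : forall n, B (xs n) = u n)
    by (intro n; unfold xs; destruct (constructive_indefinite_description _ (hu n)); auto).
  assert (cauchy : forall eps, eps > 0 -> exists N, forall n m, (n >= N)%nat -> (m >= N)%nat ->
    nrm (vsub (xs n) (xs m)) < eps).
  { intros eps he. destruct (Un_cv_hnorm H u l (a * eps / 2) cv) as [N hN].
    { apply Rlt_gt, Rdiv_lt_0_compat; nra. }
    exists N. intros n m hn hm. specialize (hN n hn) as h1. specialize (hN m hm) as h2.
    pose proof (low (vsub (xs n) (xs m))) as l1. rewrite lin_sub, !hx in l1 by auto.
    pose proof (hnorm_triangle_sub H (u n) (u m) l) as tri. rewrite (hnorm_sub_sym H l (u m)) in tri.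
    apply (Rmult_lt_reg_l a); auto. lra. }
  destruct (comp xs cauchy) as [x hxl]. exists x.
  apply (limit_unique u); auto.
  apply (Un_cv_ext (fun n => nrm (vsub (B (xs n)) (B x)))); [intro n; rewrite hx; auto|].
  apply (bounded_op_limit B K); auto.
Qed.

Lemma invertible_of_lower_bounds (B B' : H -> H) a b K : linear_op H B -> 0 < a -> 0 < b ->
  (forall x, a * nrm x <= nrm (B x)) -> (forall x, nrm (B x) <= K * nrm x) ->
  (forall y, b * nrm y <= nrm (B' y)) -> (forall x y, inner (B x) y = inner x (B' y)) ->
  exists Rv, bounded_inverse_on H (full H) B Rv.
Proof.
  intros LB ap bp low bd lowb adj.
  destruct (inverse_of_lower_bound H (full H) B (subspace_full H) LB (fun _ _ => I) a ap)
    as [Rv [HR _]]; [intros; auto| |exists Rv; exact HR].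
  intros v _. apply NNPP. intro nv.
  destruct (orthogonal_vector H comp (range H B) v) as [w [wn hw]].
  - apply subspace_range_linear; auto.
  - exact (range_closed B a K LB ap low bd).
  - intros [x hx]. apply nv. exists x; split; auto. exact I.
  - apply wn, hnorm_eq0. assert (B'w : B' w = vzero).
    { apply inner_def. rewrite <- adj, hw; [reflexivity|]. exists (B' w); auto. }
    pose proof (lowb w) as l. rewrite B'w, hnorm_zero in l. pose proof (hnorm_ge0 H w). nra.
Qed.

(* A nonzero [v] orthogonal to the kernel of [phi] represents [phi] up to the scalar
   [conj (phi v) / |v|^2], since [phi v x - phi x v] lies in the kernel. *)
Lemma Riesz_representation (phi : H -> Cx) :
  (forall x y, phi (vadd x y) = Cadd (phi x) (phi y)) ->
  (forall a x, phi (vscal a x) = Cmul a (phi x)) ->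
  closed_set H (fun x => phi x = C0) ->
  exists u, forall x, phi x = inner x u.
Proof.
  intros hadd hscal hcl.
  destruct (classic (forall x, phi x = C0)) as [all|nall].
  { exists vzero. intro x. rewrite inner_0r. apply all. }
  apply not_all_ex_not in nall. destruct nall as [w0 hw0].
  destruct (orthogonal_vector H comp (fun x => phi x = C0) w0) as [v [vn hv]]; auto.
  { assert (phi vzero = C0) by (rewrite <- (vscal_0 H vzero), hscal; apply Cx_ext; simpl; ring).
    repeat split; auto.
    - intros x y h1 h2. rewrite hadd, h1, h2. apply Cx_ext; simpl; ring.
    - intros a x h1. rewrite hscal, h1. apply Cx_ext; simpl; ring. }
  exists (vscal (Cmul (Cconj (phi v)) (RC (/ Cre (inner v v)))) v). intro x.
  assert (Kc : phi (vsub (vscal (phi v) x) (vscal (phi x) v)) = C0).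
  { unfold Defs.vsub. rewrite hadd, vopp_scal, !hscal. apply Cx_ext; simpl; ring. }
  specialize (hv _ Kc). rewrite inner_subl, !inner_scall in hv.
  assert (vp : 0 < Cre (inner v v)) by (pose proof (hnorm_gt0 H v vn); rewrite <- hnorm_sq; nra).
  rewrite inner_scalr.
  pose proof (inner_self_Im H v). destruct (inner v v) as [n1 n2]. simpl in *. subst n2.
  destruct (phi v) as [p1 p2], (phi x) as [q1 q2], (inner x v) as [r1 r2].
  unfold Cmul, Cadd, Copp, Cconj in hv |- *. simpl in *. injection hv; intros.
  assert (e1 : p1 * r1 - p2 * r2 = q1 * n1) by lra.
  assert (e2 : p1 * r2 + p2 * r1 = q2 * n1) by lra.
  apply Cx_ext; simpl.
  - replace ((p1 * / n1 - - p2 * 0) * r1 - - (p1 * 0 + - p2 * / n1) * r2)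
      with ((p1 * r1 - p2 * r2) / n1) by (field; lra).
    rewrite e1; field; lra.
  - replace ((p1 * / n1 - - p2 * 0) * r2 + - (p1 * 0 + - p2 * / n1) * r1)
      with ((p1 * r2 + p2 * r1) / n1) by (field; lra).
    rewrite e2; field; lra.
Qed.

Lemma adjoint_exists (T : H -> H) : is_bounded_operator H T ->
  exists Ts, is_bounded_operator H Ts /\ is_adjoint H T Ts.
Proof.
  intros [LT [K hK]].
  assert (ex : forall y, exists u, forall x, inner (T x) y = inner x u).
  { intro y. apply (Riesz_representation (fun x => inner (T x) y)).
    - intros x x'. rewrite lin_add, inner_addl; auto.
    - intros a x. rewrite lin_scal, inner_scall; auto.
    - intros u l hu cv. apply Cn2_eq0, Rle_antisym; [|apply Cn2_ge0].
      apply Rnot_lt_le; intro g. rewrite <- Cabs_sq in g.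
      assert (ca : 0 < Cabs (inner (T l) y)) by (pose proof (Cabs_ge0 (inner (T l) y)); nra).
      destruct (Un_cv_hnorm H _ _ (Cabs (inner (T l) y) / (nrm y + 1))
        (bounded_op_limit T K u l LT hK cv)) as [N hN].
      { apply Rlt_gt, Rdiv_lt_0_compat; [auto|]. pose proof (hnorm_ge0 H y). lra. }
      specialize (hN N (le_n _)). set (c0 := Cabs (inner (T l) y)) in *.
      assert (e : c0 = Cabs (inner (vsub (T (u N)) (T l)) y))
        by (unfold c0; rewrite inner_subl, hu; unfold Cabs, Cn2; simpl; f_equal; ring).
      pose proof (Cauchy_Schwarz H (vsub (T (u N)) (T l)) y). pose proof (hnorm_ge0 H y).
      assert (c0 / (nrm y + 1) * nrm y < c0).
      { replace (c0 / (nrm y + 1) * nrm y) with (c0 - c0 / (nrm y + 1)) by (field; lra).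
        pose proof (Rdiv_lt_0_compat c0 (nrm y + 1) ca ltac:(lra)). lra. }
      assert (nrm (vsub (T (u N)) (T l)) * nrm y <= c0 / (nrm y + 1) * nrm y)
        by (apply Rmult_le_compat_r; lra).
      lra. }
  set (Ts := fun y => proj1_sig (constructive_indefinite_description _ (ex y))).
  assert (hTs : forall x y, inner (T x) y = inner x (Ts y)).
  { intros x y. unfold Ts. destruct (constructive_indefinite_description _ (ex y)); simpl; auto. }
  clearbody Ts. exists Ts. split; [split; [split|]|]; auto.
  - intros y1 y2. apply inner_ext. intro x. rewrite <- hTs, !inner_addr, <- !hTs; auto.
  - intros a y. apply inner_ext. intro x. rewrite <- hTs, !inner_scalr, <- hTs; auto.
  - exists (Rabs K). intro y. pose proof (hnorm_sq H (Ts y)) as e.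
    rewrite <- hTs in e. pose proof (Re_inner_le H (T (Ts y)) y). pose proof (hK (Ts y)).
    pose proof (hnorm_ge0 H (Ts y)). pose proof (hnorm_ge0 H y). pose proof (Rle_abs K).
    pose proof (hnorm_ge0 H (T (Ts y))).
    destruct (Req_dec (nrm (Ts y)) 0) as [z|nz]; [rewrite z; pose proof (Rabs_pos K); nra|].
    apply (Rmult_le_reg_l (nrm (Ts y))); [lra|].
    assert (nrm (T (Ts y)) <= Rabs K * nrm (Ts y)) by nra. nra.
Qed.

End CompleteOperators.

(** * Uniform approximation of [|(T - z) x|] from the filtration *)

Definition eventually (P : nat -> Prop) := exists N, forall n, (n >= N)%nat -> P n.

Lemma eventually_forall_lt (P : nat -> nat -> Prop) (A : nat) :
  (forall i, (i < A)%nat -> eventually (P i)) -> eventually (fun n => forall i, (i < A)%nat -> P i n).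
Proof.
  induction A; intros h; [exists O; intros; lia|].
  destruct IHA as [N1 h1]; [intros i hi; apply h; lia|].
  destruct (h A (Nat.lt_succ_diag_r A)) as [N2 h2].
  exists (max N1 N2). intros n hn i hi. destruct (Nat.eq_dec i A) as [->|ne].
  - apply h2; lia.
  - apply h1; lia.
Qed.

Lemma floor_nat (q : R) : 0 <= q -> exists i : nat, INR i <= q < INR i + 1.
Proof.
  intro hq. destruct (base_Int_part q) as [h1 h2].
  assert (0 <= Int_part q)%Z.
  { apply le_IZR, Rnot_lt_le. intro l. apply lt_IZR in l.
    assert (Int_part q <= -1)%Z by lia. apply IZR_le in H. lra. }
  exists (Z.to_nat (Int_part q)). rewrite INR_IZR_INZ, Z2Nat.id by auto. lra.
Qed.

Lemma Rmult_div_succ_le (L a : R) : 0 <= L -> 0 <= a -> L * (a / (L + 1)) <= a.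
Proof.
  intros hL ha. replace (L * (a / (L + 1))) with (a - a / (L + 1)) by (field; lra).
  pose proof (Rinv_0_lt_compat (L + 1) ltac:(lra)). unfold Rdiv. nra.
Qed.

Definition grid_point (a : R) (G k : nat) : R := a + INR k / INR G.

Lemma grid_point_bounds a G k : (0 < G)%nat -> (k <= G)%nat -> a <= grid_point a G k <= a + 1.
Proof.
  intros hG hk. assert (gp : 0 < INR G) by (apply lt_0_INR; auto).
  apply le_INR in hk. pose proof (pos_INR k). pose proof (Rinv_0_lt_compat _ gp).
  unfold grid_point, Rdiv. split; [nra|].
  apply Rplus_le_compat_l, (Rmult_le_reg_r (INR G)); auto. rewrite Rmult_assoc, Rinv_l; lra.
Qed.

Lemma grid_round (a r : R) (G : nat) : (0 < G)%nat -> a <= r <= a + 1 ->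
  exists k, (k <= G)%nat /\ Rabs (r - grid_point a G k) <= / INR G.
Proof.
  intros hG hr. assert (gp : 0 < INR G) by (apply lt_0_INR; auto).
  destruct (floor_nat ((r - a) * INR G)) as [k [h1 h2]]; [nra|].
  exists k. split.
  - apply INR_le. nra.
  - unfold grid_point.
    replace (r - (a + INR k / INR G)) with (((r - a) * INR G - INR k) / INR G) by (field; lra).
    pose proof (Rinv_0_lt_compat _ gp). unfold Rdiv.
    rewrite Rabs_mult, (Rabs_right (/ INR G)), (Rabs_right (_ - _)) by lra. nra.
Qed.

Section UniformApproximation.
Variable H : HilbertSpace.
Local Notation nrm := (hnorm H).
Local Notation vsub := (vsub H).
Variables (T : H -> H) (K : R).
Hypotheses (LT : linear_op H T) (hK : forall x, nrm (T x) <= K * nrm x) (K0 : 0 <= K).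
Variable Mn : nat -> H -> Prop.
Hypotheses (hmono : forall n m y, (n <= m)%nat -> Mn n y -> Mn m y)
  (hscal : forall n a y, Mn n y -> Mn n (vscal a y))
  (hdense : forall x eps, eps > 0 -> exists n y, Mn n y /\ nrm (vsub x y) < eps).

(* For a unit vector [x], [|(T - z) x|^2 = |z|^2 + (1 + |z|) * qform s1 s2 t x] with
   [(s1, s2, t) = (Re z, Im z, 1) / (1 + |z|)], which ranges over a compact box. *)
Definition qform (s1 s2 t : R) (x : H) : R :=
  -2 * (s1 * Cre (inner (T x) x) + s2 * Cim (inner (T x) x)) + t * (nrm (T x) * nrm (T x)).

Lemma shift_sq_qform (z : Cx) (x : H) : unitv H x ->
  nrm (shift H T z x) * nrm (shift H T z x) =
  Cn2 z + (1 + Cabs z) * qform (Cre z / (1 + Cabs z)) (Cim z / (1 + Cabs z)) (/ (1 + Cabs z)) x.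
Proof.
  intro u. pose proof (Cabs_ge0 z). unfold shift, qform.
  rewrite hnorm_sq, inner_sub_scal_self, <- !hnorm_sq, u. simpl. field. lra.
Qed.

Lemma inner_T_self_bound (x : H) : unitv H x -> Cabs (inner (T x) x) <= K.
Proof.
  intro u. pose proof (Cauchy_Schwarz H (T x) x). pose proof (hK x).
  unfold unitv in u. rewrite u in *. lra.
Qed.

Lemma qform_param_lipschitz (a1 a2 a3 b1 b2 b3 : R) (x : H) : unitv H x ->
  Rabs (qform a1 a2 a3 x - qform b1 b2 b3 x) <=
  2 * K * Rabs (a1 - b1) + 2 * K * Rabs (a2 - b2) + K * K * Rabs (a3 - b3).
Proof.
  intro u. unfold qform. pose proof (inner_T_self_bound x u).
  destruct (Re_Im_le_Cabs (inner (T x) x)) as [r1 r2].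
  pose proof (hK x). unfold unitv in u. rewrite u in *. pose proof (hnorm_ge0 H (T x)).
  set (c1 := Cre (inner (T x) x)) in *. set (c2 := Cim (inner (T x) x)) in *.
  set (n := nrm (T x)) in *.
  replace (-2 * (a1 * c1 + a2 * c2) + a3 * (n * n) - (-2 * (b1 * c1 + b2 * c2) + b3 * (n * n)))
    with (-2 * ((a1 - b1) * c1) + -2 * ((a2 - b2) * c2) + (a3 - b3) * (n * n)) by ring.
  eapply Rle_trans; [apply Rabs_triang|]. eapply Rle_trans; [apply Rplus_le_compat_r, Rabs_triang|].
  rewrite !Rabs_mult, (Rabs_left (-2)), (Rabs_right n) by lra.
  pose proof (Rabs_pos (a1 - b1)); pose proof (Rabs_pos (a2 - b2)); pose proof (Rabs_pos (a3 - b3)).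
  assert (n * n <= K * K) by nra.
  assert (Rabs (a1 - b1) * Rabs c1 <= K * Rabs (a1 - b1)) by nra.
  assert (Rabs (a2 - b2) * Rabs c2 <= K * Rabs (a2 - b2)) by nra.
  assert (Rabs (a3 - b3) * (n * n) <= K * K * Rabs (a3 - b3)) by nra. lra.
Qed.

Lemma qform_lower_bound (s1 s2 t : R) (x : H) :
  Rabs s1 <= 1 -> Rabs s2 <= 1 -> 0 <= t <= 1 -> unitv H x -> - qform s1 s2 t x <= 4 * K + K * K.
Proof.
  intros h1 h2 ht u. pose proof (qform_param_lipschitz s1 s2 t 0 0 0 x u) as hl.
  replace (qform 0 0 0 x) with 0 in hl by (unfold qform; ring).
  rewrite !Rminus_0_r, (Rabs_right t) in hl by lra.
  pose proof (Rle_abs (- qform s1 s2 t x)) as hq. rewrite Rabs_Ropp in hq. nra.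
Qed.

Lemma inner_T_self_lipschitz (x x' : H) : unitv H x -> unitv H x' ->
  Cabs (Cadd (inner (T x) x) (Copp (inner (T x') x'))) <= 2 * K * nrm (vsub x x').
Proof.
  intros u u'. set (d := vsub x x').
  replace (Cadd (inner (T x) x) (Copp (inner (T x') x'))) with (Cadd (inner (T d) x) (inner (T x') d))
    by (unfold d; rewrite lin_sub, inner_subl, inner_subr by auto; apply Cx_ext; simpl; ring).
  pose proof (Cauchy_Schwarz H (T d) x). pose proof (Cauchy_Schwarz H (T x') d).
  pose proof (hK d). pose proof (hK x'). pose proof (hnorm_ge0 H (T x')). pose proof (hnorm_ge0 H d).
  unfold unitv in u, u'. rewrite u, u' in *.
  pose proof (Cabs_triangle (inner (T d) x) (inner (T x') d)). nra.
Qed.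

Lemma T_sq_lipschitz (x x' : H) : unitv H x -> unitv H x' ->
  Rabs (nrm (T x) * nrm (T x) - nrm (T x') * nrm (T x')) <= 2 * K * K * nrm (vsub x x').
Proof.
  intros u u'. pose proof (hnorm_rev_triangle H (T x) (T x')) as r1.
  pose proof (hnorm_rev_triangle H (T x') (T x)) as r2. rewrite (hnorm_sub_sym H (T x')) in r2.
  rewrite <- lin_sub in r1, r2 by auto. pose proof (hK (vsub x x')).
  pose proof (hK x). pose proof (hK x'). unfold unitv in u, u'. rewrite u, u' in *.
  pose proof (hnorm_ge0 H (T x)). pose proof (hnorm_ge0 H (T x')).
  replace (nrm (T x) * nrm (T x) - nrm (T x') * nrm (T x'))
    with ((nrm (T x) - nrm (T x')) * (nrm (T x) + nrm (T x'))) by ring.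
  rewrite Rabs_mult, (Rabs_right (_ + _)) by lra.
  apply Rle_trans with ((K * nrm (vsub x x')) * (2 * K)); [|lra].
  apply Rmult_le_compat; try lra; [apply Rabs_pos | apply Rabs_le; lra].
Qed.

Lemma qform_vector_lipschitz (s1 s2 t : R) (x x' : H) :
  Rabs s1 <= 1 -> Rabs s2 <= 1 -> 0 <= t <= 1 -> unitv H x -> unitv H x' ->
  Rabs (qform s1 s2 t x - qform s1 s2 t x') <= (8 * K + 2 * K * K) * nrm (vsub x x').
Proof.
  intros h1 h2 ht u u'. unfold qform.
  pose proof (inner_T_self_lipschitz x x' u u') as hc. pose proof (T_sq_lipschitz x x' u u') as hn.
  destruct (Re_Im_le_Cabs (Cadd (inner (T x) x) (Copp (inner (T x') x')))) as [c1 c2].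
  simpl in c1, c2.
  set (d1 := Cre (inner (T x) x) + - Cre (inner (T x') x')) in *.
  set (d2 := Cim (inner (T x) x) + - Cim (inner (T x') x')) in *.
  set (dn := nrm (T x) * nrm (T x) - nrm (T x') * nrm (T x')) in *.
  set (c := Cabs (Cadd (inner (T x) x) (Copp (inner (T x') x')))) in *.
  replace (-2 * (s1 * Cre (inner (T x) x) + s2 * Cim (inner (T x) x)) + t * (nrm (T x) * nrm (T x))
           - (-2 * (s1 * Cre (inner (T x') x') + s2 * Cim (inner (T x') x'))
              + t * (nrm (T x') * nrm (T x'))))
    with (-2 * (s1 * d1) + -2 * (s2 * d2) + t * dn) by (unfold d1, d2, dn; ring).
  eapply Rle_trans; [apply Rabs_triang|]. eapply Rle_trans; [apply Rplus_le_compat_r, Rabs_triang|].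
  rewrite !Rabs_mult, (Rabs_left (-2)), (Rabs_right t) by lra.
  pose proof (Rabs_pos s1); pose proof (Rabs_pos s2); pose proof (Rabs_pos d1); pose proof (Rabs_pos d2).
  pose proof (Rabs_pos dn). pose proof (hnorm_ge0 H (vsub x x')).
  assert (Rabs s1 * Rabs d1 <= 2 * K * nrm (vsub x x')) by nra.
  assert (Rabs s2 * Rabs d2 <= 2 * K * nrm (vsub x x')) by nra.
  assert (t * Rabs dn <= 2 * K * K * nrm (vsub x x')) by nra. lra.
Qed.

Lemma unit_approx (x : H) (d : R) : unitv H x -> 0 < d <= 1/2 ->
  exists n x', Mn n x' /\ unitv H x' /\ nrm (vsub x x') <= 2 * d.
Proof.
  intros u hd. destruct (hdense x d) as [n [y [My hy]]]; [lra|].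
  pose proof (hnorm_rev_triangle H x y) as r1. pose proof (hnorm_rev_triangle H y x) as r2.
  rewrite hnorm_sub_sym in r2. unfold unitv in u. rewrite u in r1, r2.
  assert (yn : y <> vzero) by (intro e; subst; rewrite hnorm_zero in r1; lra).
  pose proof (hnorm_gt0 H y yn).
  exists n, (normalize H y). split; [apply hscal; auto|split; [apply normalize_unit; auto|]].
  pose proof (hnorm_triangle_sub H x (normalize H y) y) as tri.
  replace (vsub y (normalize H y)) with (vscal (Cadd C1 (Copp (RC (/ nrm y)))) y) in tri.
  - replace (Cadd C1 (Copp (RC (/ nrm y)))) with (RC ((nrm y - 1) / nrm y)) in tri
      by (apply Cx_ext; simpl; field; lra).
    rewrite hnorm_scalR in tri. unfold Rdiv in tri.
    rewrite Rabs_mult, Rabs_inv, (Rabs_right (nrm y)), Rmult_assoc, Rinv_l in tri by lra.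
    assert (Rabs (nrm y - 1) <= d) by (apply Rabs_le; lra). lra.
  - unfold normalize. rewrite <- vsub_scal, vscal_1. reflexivity.
Qed.

(* Approximate an almost minimizer of [qform] on the unit sphere. *)
Lemma qform_approx_pointwise (s1 s2 t eta : R) :
  Rabs s1 <= 1 -> Rabs s2 <= 1 -> 0 <= t <= 1 -> eta > 0 -> (exists x, unitv H x) ->
  eventually (fun n => forall x, unitv H x ->
    exists x', Mn n x' /\ unitv H x' /\ qform s1 s2 t x' <= qform s1 s2 t x + eta).
Proof.
  intros h1 h2 ht he [x1 u1].
  set (E := fun r => exists x, unitv H x /\ r = - qform s1 s2 t x).
  assert (bE : bound E)
    by (exists (4 * K + K * K); intros r [x [ux ->]]; apply qform_lower_bound; auto).
  assert (nE : exists r, E r) by (exists (- qform s1 s2 t x1), x1; auto).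
  destruct (Rsup_approx E (eta / 2) bE nE) as [r [[x0 [u0 ->]] hr]]; [lra|].
  set (L := 8 * K + 2 * K * K). assert (0 <= L) by (unfold L; nra).
  set (d := Rmin (1/2) (eta / (4 * (L + 1)))).
  assert (dp : 0 < d <= 1/2)
    by (split; [apply Rmin_pos; [lra|apply Rdiv_lt_0_compat; lra]|apply Rmin_l]).
  destruct (unit_approx x0 d u0 dp) as [N [x' [Mx' [u' hx']]]].
  exists N. intros n hn x ux. exists x'. split; [apply (hmono N); auto|split; auto].
  pose proof (qform_vector_lipschitz s1 s2 t x0 x' h1 h2 ht u0 u') as hv.
  rewrite Rabs_minus_sym in hv. fold L in hv.
  assert (L * nrm (vsub x0 x') <= eta / 2).
  { assert (d <= eta / (4 * (L + 1))) by apply Rmin_r.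
    apply Rle_trans with (L * (eta / 2 / (L + 1))).
    - apply Rmult_le_compat_l; [lra|]. replace (eta / 2 / (L + 1)) with (2 * (eta / (4 * (L + 1))))
        by (field; lra). lra.
    - apply Rmult_div_succ_le; lra. }
  pose proof (Rsup_ub E (- qform s1 s2 t x) bE (ex_intro _ x (conj ux eq_refl))).
  pose proof (Rle_abs (qform s1 s2 t x' - qform s1 s2 t x0)). lra.
Qed.

Lemma qform_approx_grid (G : nat) (eta : R) : (0 < G)%nat -> eta > 0 -> (exists x, unitv H x) ->
  eventually (fun n => forall i j k, (i <= G)%nat -> (j <= G)%nat -> (k <= G)%nat ->
    let s1 := 2 * grid_point (-1/2) G i in let s2 := 2 * grid_point (-1/2) G j in
    let t := grid_point 0 G k in
    forall x, unitv H x ->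
    exists x', Mn n x' /\ unitv H x' /\ qform s1 s2 t x' <= qform s1 s2 t x + eta).
Proof.
  intros hG he nt.
  destruct (eventually_forall_lt (fun i n => forall j, (j < S G)%nat -> forall k, (k < S G)%nat ->
    let s1 := 2 * grid_point (-1/2) G i in let s2 := 2 * grid_point (-1/2) G j in
    let t := grid_point 0 G k in
    forall x, unitv H x ->
    exists x', Mn n x' /\ unitv H x' /\ qform s1 s2 t x' <= qform s1 s2 t x + eta) (S G))
    as [N hN].
  - intros i hi. apply (eventually_forall_lt (fun j n => forall k, (k < S G)%nat -> _)).
    intros j hj. apply (eventually_forall_lt (fun k n => _)). intros k hk.
    pose proof (grid_point_bounds (-1/2) G i hG ltac:(lia)).
    pose proof (grid_point_bounds (-1/2) G j hG ltac:(lia)).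
    pose proof (grid_point_bounds 0 G k hG ltac:(lia)).
    apply qform_approx_pointwise; auto; try lra; apply Rabs_le; lra.
  - exists N. intros n hn i j k hi hj hk. apply hN; auto; lia.
Qed.

(* Round the parameters to a grid of mesh [1 / G]. *)
Lemma qform_approx_uniform (eta : R) : eta > 0 -> (exists x, unitv H x) ->
  eventually (fun n => forall s1 s2 t, Rabs s1 <= 1 -> Rabs s2 <= 1 -> 0 <= t <= 1 ->
    forall x, unitv H x ->
    exists x', Mn n x' /\ unitv H x' /\ qform s1 s2 t x' <= qform s1 s2 t x + eta).
Proof.
  intros he nt. set (L := 8 * K + K * K). assert (0 <= L) by (unfold L; nra).
  destruct (inv_INR_succ_lt (eta / (4 * (L + 1)))) as [g hg];
    [apply Rlt_gt, Rdiv_lt_0_compat; lra|].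
  set (G := S g). specialize (hg g (le_n _)). rewrite <- S_INR in hg. fold G in hg.
  assert (Gp : (0 < G)%nat) by (unfold G; lia). assert (gp : 0 < INR G) by (apply lt_0_INR; auto).
  destruct (qform_approx_grid G (eta / 2) Gp ltac:(lra) nt) as [N hN].
  exists N. intros n hn s1 s2 t h1 h2 ht x ux. apply Rabs_le_bounds in h1, h2.
  destruct (grid_round (-1/2) (s1 / 2) G Gp) as [i [hi ri]]; [lra|].
  destruct (grid_round (-1/2) (s2 / 2) G Gp) as [j [hj rj]]; [lra|].
  destruct (grid_round 0 t G Gp) as [k [hk rk]]; [lra|].
  destruct (hN n hn i j k hi hj hk x ux) as [x' [Mx' [u' hx']]].
  exists x'. split; auto. split; auto.
  assert (grid : forall y, unitv H y -> Rabs (qform s1 s2 t y -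
    qform (2 * grid_point (-1/2) G i) (2 * grid_point (-1/2) G j) (grid_point 0 G k) y) <= eta / 4).
  { intros y uy. eapply Rle_trans; [apply qform_param_lipschitz; auto|].
    replace (s1 - 2 * grid_point (-1/2) G i) with (2 * (s1 / 2 - grid_point (-1/2) G i)) by field.
    replace (s2 - 2 * grid_point (-1/2) G j) with (2 * (s2 / 2 - grid_point (-1/2) G j)) by field.
    rewrite !Rabs_mult, (Rabs_right 2) by lra. pose proof (Rinv_0_lt_compat _ gp).
    apply Rle_trans with (L * / INR G); [unfold L; nra|].
    apply Rle_trans with (L * (eta / 4 / (L + 1))).
    - apply Rmult_le_compat_l; [lra|]. replace (eta / 4 / (L + 1)) with (eta / (4 * (L + 1)))
        by (field; lra). lra.
    - apply Rmult_div_succ_le; lra. }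
  pose proof (grid x ux) as gx. pose proof (grid x' u') as gx'.
  apply Rabs_le_bounds in gx, gx'. simpl in hx'. lra.
Qed.

(* The defect [(1 + |z|) eta] is small for bounded [z], and is absorbed by [|(T - z) x| >= |z| - K]
   for large [z]. *)
Lemma shift_approx_uniform (eps : R) : eps > 0 -> (exists x, unitv H x) ->
  eventually (fun n => forall z x, unitv H x ->
    exists x', Mn n x' /\ unitv H x' /\ nrm (shift H T z x') <= nrm (shift H T z x) + eps).
Proof.
  intros he nt. set (eta := Rmin eps (eps * eps / (2 * K + 2))).
  assert (e1 : eta <= eps) by apply Rmin_l. assert (e2 : eta <= eps * eps / (2 * K + 2)) by apply Rmin_r.
  assert (etap : eta > 0) by (apply Rmin_pos; [lra|apply Rdiv_lt_0_compat; nra]).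
  destruct (qform_approx_uniform eta etap nt) as [N hN]. exists N. intros n hn z x ux.
  set (a := Cabs z). pose proof (Cabs_ge0 z) as a0. fold a in a0.
  destruct (Re_Im_le_Cabs z) as [z1 z2]. fold a in z1, z2.
  assert (bnd : forall r, Rabs r <= a -> Rabs (r / (1 + a)) <= 1).
  { intros r hr. unfold Rdiv. rewrite Rabs_mult, (Rabs_right (/ (1 + a))) by (apply Rle_ge, Rlt_le, Rinv_0_lt_compat; lra).
    apply (Rmult_le_reg_r (1 + a)); [lra|]. rewrite Rmult_assoc, Rinv_l; lra. }
  assert (bt : 0 <= / (1 + a) <= 1).
  { pose proof (Rinv_0_lt_compat (1 + a) ltac:(lra)). split; [lra|].
    rewrite <- Rinv_1. apply Rinv_le_contravar; lra. }
  destruct (hN n hn _ _ _ (bnd _ z1) (bnd _ z2) bt x ux) as [x' [Mx' [u' hx']]].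
  exists x'. split; auto. split; auto.
  set (A := nrm (shift H T z x)). set (A' := nrm (shift H T z x')).
  assert (key : A' * A' <= A * A + (1 + a) * eta).
  { unfold A, A'. rewrite !shift_sq_qform by auto. fold a. nra. }
  pose proof (hnorm_ge0 H (shift H T z x)) as A0. pose proof (hnorm_ge0 H (shift H T z x')) as A'0.
  fold A in A0. fold A' in A'0.
  apply sq_le_sq; [lra|]. destruct (Rle_lt_dec a (2 * K + 1)) as [sm|lg].
  - assert ((1 + a) * eta <= eps * eps).
    { apply Rle_trans with ((2 * K + 2) * (eps * eps / (2 * K + 2))); [apply Rmult_le_compat; lra|].
      right; field; lra. }
    nra.
  - assert (Alow : a - K <= A).
    { unfold A, shift. pose proof (hnorm_rev_triangle H (vscal z x) (T x)) as r.
      rewrite hnorm_sub_sym, hnorm_scal in r. pose proof (hK x). unfold unitv in ux.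
      rewrite ux in *. fold a in r. lra. }
    assert ((1 + a) * eta <= 2 * A * eta) by (apply Rmult_le_compat_r; lra).
    nra.
Qed.

End UniformApproximation.

(** * Compressions [Q T |_(Ran Q)] *)

Section Compression.
Variable H : HilbertSpace.
Local Notation nrm := (hnorm H).
Local Notation vsub := (vsub H).
Variable Q : H -> H.
Hypothesis OQ : orth_projection H Q.

Lemma proj_linear : linear_op H Q.
Proof. destruct OQ as [[L _] _]; exact L. Qed.

Lemma proj_id_range y : range H Q y -> Q y = y.
Proof. destruct OQ as [_ [idem _]]. intros [x <-]. apply idem. Qed.

Lemma proj_in_range x : range H Q (Q x).
Proof. exists x; auto. Qed.

Lemma subspace_range : subspace H (range H Q).
Proof. apply subspace_range_linear, proj_linear. Qed.

(* Pythagoras for [v = Q v + (v - Q v)]. *)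
Lemma proj_contraction v : nrm (Q v) <= nrm v.
Proof.
  destruct OQ as [_ [idem adj]].
  assert (o : Cre (inner (Q v) (vsub v (Q v))) = 0)
    by (rewrite inner_subr, (adj v (Q v)), idem, (adj v v); simpl; ring).
  apply sq_le_sq; [apply hnorm_ge0|]. rewrite !hnorm_sq.
  replace (Cre (inner v v))
    with (Cre (inner (vadd (Q v) (vsub v (Q v))) (vadd (Q v) (vsub v (Q v)))))
    by (rewrite vadd_comm, vsub_add; auto).
  rewrite inner_add_self, o.
  pose proof (inner_pos (vsub v (Q v))). lra.
Qed.

Lemma compression_linear A : linear_op H A -> linear_op H (fun x => Q (A x)).
Proof. intro LA. apply lin_comp; auto. apply proj_linear. Qed.

Lemma compression_invariant A : invariant H (range H Q) (fun x => Q (A x)).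
Proof. intros x _. apply proj_in_range. Qed.

Lemma shift_compression A z x : range H Q x ->
  shift H (fun y => Q (A y)) z x = Q (shift H A z x).
Proof.
  intro Rx. pose proof proj_linear as L. unfold shift.
  rewrite (lin_sub H Q), (lin_scal H Q), (proj_id_range x Rx); auto.
Qed.

Lemma shift_compression_defect A z x :
  shift H A z x = vadd (shift H (fun y => Q (A y)) z x) (vsub (A x) (Q (A x))).
Proof.
  unfold shift, Defs.vsub.
  rewrite vadd_ACA, (vadd_comm (vopp (vscal z x))), vadd_ACA, vadd_oppr, vadd_0. reflexivity.
Qed.

Lemma compression_adjoint A A' : (forall x y, inner (A x) y = inner x (A' y)) ->
  forall u v, range H Q u -> range H Q v -> inner (Q (A u)) v = inner u (Q (A' v)).
Proof.
  intros adj u v Ru Rv. destruct OQ as [_ [_ pa]].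
  rewrite pa, (proj_id_range v Rv), adj, <- (proj_id_range u Ru), pa, (proj_id_range u Ru).
  reflexivity.
Qed.

Lemma compression_defect_bound A K : linear_op H A -> (forall x, nrm (A x) <= K * nrm x) ->
  forall x, range H Q x ->
  nrm (vsub (A x) (Q (A x))) <= opnorm H (fun x => vsub (A (Q x)) (Q (A (Q x)))) * nrm x.
Proof.
  intros LA hK x Rx. pose proof proj_linear as LQ.
  assert (LD : linear_op H (fun x => vsub (A (Q x)) (Q (A (Q x)))))
    by (apply lin_diff; [apply lin_comp|apply lin_comp; [|apply lin_comp]]; auto).
  rewrite <- (proj_id_range x Rx) at 1 2.
  apply (opnorm_on_bound H (full H) (fun x => vsub (A (Q x)) (Q (A (Q x)))) (subspace_full H));
    [|exists (2 * Rabs K)|exact I].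
  - intros a y _. exact (lin_scal H _ a y LD).
  - intros y _. eapply Rle_trans; [apply hnorm_sub_le|].
    pose proof (hK (Q y)). pose proof (proj_contraction (A (Q y))). pose proof (proj_contraction y).
    pose proof (Rle_abs K). pose proof (hnorm_ge0 H (Q y)). pose proof (Rabs_pos K).
    assert (K * nrm (Q y) <= Rabs K * nrm y) by nra. lra.
Qed.

End Compression.

Section CompressionBounds.
Variable H : HilbertSpace.
Local Notation nrm := (hnorm H).
Local Notation vsub := (vsub H).
Hypothesis comp : complete_space H.
Variables (T Ts : H -> H) (K : R).
Hypotheses (LT : linear_op H T) (LTs : linear_op H Ts)
  (hK : forall x, nrm (T x) <= K * nrm x) (adjT : forall x y, inner (T x) y = inner x (Ts y)).
Variable Q : H -> H.
Hypotheses (OQ : orth_projection H Q) (ntQ : nontrivial H (range H Q)) (ntH : nontrivial H (full H)).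

Lemma adjoint_symmetric x y : inner (Ts x) y = inner x (T y).
Proof. rewrite inner_conj, <- adjT, <- inner_conj. reflexivity. Qed.

Local Notation Tn := (fun x => Q (T x)).
Local Notation Psin z := (Psi_on H (range H Q) Tn z).

Lemma Psi_compression_le_shift z x : range H Q x -> unitv H x -> Psin z <= nrm (shift H T z x).
Proof.
  intros Rx ux. pose proof (Psi_on_lower_bound H (range H Q) Tn (subspace_range H Q OQ)
    (compression_linear H Q OQ T LT) (compression_invariant H Q T) ntQ z x Rx) as h.
  unfold unitv in ux. rewrite ux, Rmult_1_r, (shift_compression H Q OQ T z x Rx) in h.
  pose proof (proj_contraction H Q OQ (shift H T z x)). lra.
Qed.

Lemma Psi_compression_le_adjoint_shift z y : range H Q y -> unitv H y ->
  Psin z <= nrm (shift H Ts (Cconj z) y).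
Proof.
  intros Ry uy. pose proof (Psi_on_adjoint_lower_bound H (range H Q) Tn (fun x => Q (Ts x)) z
    (subspace_range H Q OQ) (compression_linear H Q OQ T LT) (compression_invariant H Q T) ntQ
    (compression_adjoint H Q OQ T Ts adjT) y Ry) as h.
  unfold unitv in uy. rewrite uy, Rmult_1_r, (shift_compression H Q OQ Ts (Cconj z) y Ry) in h.
  pose proof (proj_contraction H Q OQ (shift H Ts (Cconj z) y)). lra.
Qed.

(* If [T - z] is not invertible, then by [invertible_of_lower_bounds] either [T - z] or its
   adjoint nearly annihilates some unit vector. *)
Lemma Psi_compression_upper z eps : eps > 0 ->
  (forall x, unitv H x -> exists x', range H Q x' /\ unitv H x' /\
     nrm (shift H T z x') <= nrm (shift H T z x) + eps) ->
  (forall y, unitv H y -> exists y', range H Q y' /\ unitv H y' /\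
     nrm (shift H Ts (Cconj z) y') <= nrm (shift H Ts (Cconj z) y) + eps) ->
  Psin z <= Psi H T z + 2 * eps.
Proof.
  intros he apT apTs. unfold Psi.
  destruct (classic (invertible_on H (full H) T z)) as [inv|ninv].
  - destruct (Psi_on_approx H (full H) T (subspace_full H) LT (fun _ _ => I) ntH z eps inv he)
      as [x [_ [ux hx]]].
    destruct (apT x ux) as [x' [Rx' [ux' hx']]].
    pose proof (Psi_compression_le_shift z x' Rx' ux'). lra.
  - rewrite (Psi_on_not_invertible H (full H) T z ninv).
    destruct (classic ((exists x, unitv H x /\ nrm (shift H T z x) < eps) \/
                       (exists y, unitv H y /\ nrm (shift H Ts (Cconj z) y) < eps)))
      as [[[x [ux hx]]|[y [uy hy]]]|none].
    + destruct (apT x ux) as [x' [Rx' [ux' hx']]].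
      pose proof (Psi_compression_le_shift z x' Rx' ux'). lra.
    + destruct (apTs y uy) as [y' [Ry' [uy' hy']]].
      pose proof (Psi_compression_le_adjoint_shift z y' Ry' uy'). lra.
    + exfalso. apply ninv. apply not_or_and in none as [n1 n2].
      apply (invertible_of_lower_bounds H comp (shift H T z) (shift H Ts (Cconj z)) eps eps
        (K + Cabs z) (shift_linear H T z LT)); auto.
      * apply lower_bound_from_unit; [apply shift_linear; auto|lra|].
        intros x ux. apply Rnot_lt_le; intro l. apply n1; eauto.
      * intro x. unfold shift. eapply Rle_trans; [apply hnorm_sub_le|].
        rewrite hnorm_scal. pose proof (hK x). lra.
      * apply lower_bound_from_unit; [apply shift_linear; auto|lra|].
        intros y uy. apply Rnot_lt_le; intro l. apply n2; eauto.
      * intros x y. apply (shift_adjoint H (full H) T Ts z (fun u v _ _ => adjT u v)); exact I.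
Qed.

Section FiniteRank.
Variables (k : nat) (e : nat -> H).
Hypothesis spQ : forall y, range H Q y -> span H k e y.

(* The compression inherits the lower bound [Psi T z] up to the defect [|(I - Q) T Q|]; when
   only [T*] has a small defect, the bound passes back through the finite-dimensional adjoint. *)
Lemma Psi_compression_lower z delta :
  (forall x, range H Q x -> nrm (vsub (T x) (Q (T x))) <= delta * nrm x) \/
  (forall x, range H Q x -> nrm (vsub (Ts x) (Q (Ts x))) <= delta * nrm x) ->
  Psi H T z - delta <= Psin z.
Proof.
  intros defect. unfold Psi.
  pose proof (Psi_on_ge0 H (range H Q) Tn (subspace_range H Q OQ) z).
  set (c := Psi_on H (full H) T z - delta).
  destruct (Rle_lt_dec c 0) as [sm|cp]; [lra|].
  apply (Psi_on_ge_fd H (range H Q) k e (subspace_range H Q OQ) spQ);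
    auto using compression_linear, compression_invariant.
  destruct defect as [dT|dTs].
  - intros x Rx.
    pose proof (hnorm_triangle H (shift H Tn z x) (vsub (T x) (Q (T x)))) as tri.
    rewrite <- shift_compression_defect in tri. pose proof (dT x Rx).
    pose proof (Psi_on_lower_bound H (full H) T (subspace_full H) LT (fun _ _ => I) ntH z x I). unfold c. lra.
  - apply (adjoint_lower_bound_fd H (range H Q) k e (subspace_range H Q OQ) spQ
      (shift H (fun x => Q (Ts x)) (Cconj z))); auto.
    + apply shift_linear, compression_linear; auto.
    + apply shift_invariant; [apply subspace_range; auto|apply compression_invariant].
    + intros y Ry.
      pose proof (hnorm_triangle H (shift H (fun x => Q (Ts x)) (Cconj z) y)
        (vsub (Ts y) (Q (Ts y)))) as tri.
      rewrite <- shift_compression_defect in tri. pose proof (dTs y Ry).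
      pose proof (Psi_on_adjoint_lower_bound H (full H) T Ts z (subspace_full H) LT
        (fun _ _ => I) ntH (fun u v _ _ => adjT u v) y I). unfold c. lra.
    + intros u v Ru Rv. rewrite (shift_adjoint H (range H Q) _ Tn (Cconj z)
        (compression_adjoint H Q OQ Ts T adjoint_symmetric) u v Ru Rv), Cconj_invol.
      reflexivity.
Qed.

End FiniteRank.
End CompressionBounds.

Section Filtrations.
Variable H : HilbertSpace.
Local Notation nrm := (hnorm H).
Local Notation vsub := (vsub H).
Variable P : nat -> H -> H.
Hypothesis HP : filtration H P.

Lemma filtration_proj n : orth_projection H (P n).
Proof. apply HP. Qed.

Lemma filtration_mono n m y : (n <= m)%nat -> range H (P n) y -> range H (P m) y.
Proof. intros hnm Ry. induction hnm; auto. apply HP; auto. Qed.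

Lemma filtration_scal n a y : range H (P n) y -> range H (P n) (vscal a y).
Proof. apply (subspace_range H (P n) (filtration_proj n)). Qed.

Lemma filtration_span n : exists k e, forall y, range H (P n) y -> span H k e y.
Proof.
  destruct (proj2 (proj1 HP n)) as [k [e he]]. exists k, e. intros y hy.
  destruct (he y hy) as [c ->]. exists c. apply fold_right_vsum.
Qed.

Lemma filtration_nontrivial : (exists x, unitv H x) -> eventually (fun n => nontrivial H (range H (P n))).
Proof.
  intros [x ux]. destruct (unit_approx H (fun n => range H (P n)) filtration_scal (proj2 (proj2 HP))
    x (1/2) ux) as [N [x0 [Rx0 [u0 _]]]]; [lra|].
  exists N. intros n hn. exists x0. split; [apply (filtration_mono N); auto|apply unitv_neq0; auto].
Qed.

Lemma filtration_shift_approx (A : H -> H) K eps : linear_op H A ->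
  (forall x, nrm (A x) <= K * nrm x) -> 0 <= K -> eps > 0 -> (exists x, unitv H x) ->
  eventually (fun n => forall z x, unitv H x ->
    exists x', range H (P n) x' /\ unitv H x' /\ nrm (shift H A z x') <= nrm (shift H A z x) + eps).
Proof.
  intros LA hA K0 he nt. exact (shift_approx_uniform H A K LA hA K0 (fun n => range H (P n))
    filtration_mono filtration_scal (proj2 (proj2 HP)) eps he nt).
Qed.

Lemma quasitriangular_defect (A : H -> H) K delta : linear_op H A ->
  (forall x, nrm (A x) <= K * nrm x) -> delta > 0 ->
  Un_cv (fun n => opnorm H (fun x => vsub (A (P n x)) (P n (A (P n x))))) 0 ->
  eventually (fun n => forall x, range H (P n) x -> nrm (vsub (A x) (P n (A x))) <= delta * nrm x).
Proof.
  intros LA hA hd q. destruct (q delta hd) as [N hN]. exists N. intros n hn x Rx.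
  specialize (hN n hn). unfold Rdist in hN. rewrite Rminus_0_r in hN.
  pose proof (Rle_abs (opnorm H (fun x => vsub (A (P n x)) (P n (A (P n x)))))).
  pose proof (hnorm_ge0 H x).
  eapply Rle_trans; [apply (compression_defect_bound H (P n) (filtration_proj n) A K LA hA x Rx)|].
  apply Rmult_le_compat_r; lra.
Qed.

End Filtrations.

Lemma Psi_trivial_space (H : HilbertSpace) (M : H -> Prop) (A : H -> H) z :
  ~ (exists x, unitv H x) -> subspace H M -> Psi_on H M A z = 0.
Proof.
  intros triv SM. apply Psi_on_trivial; auto. intros x _.
  apply NNPP; intro nx. apply triv. exists (normalize H x). apply normalize_unit; auto.
Qed.

Lemma Psi_compression_converges (H : HilbertSpace) (comp : complete_space H)
  (T Ts : H -> H) K (LT : linear_op H T) (LTs : linear_op H Ts) (K0 : 0 <= K)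
  (hK : forall x, hnorm H (T x) <= K * hnorm H x) (hKs : forall x, hnorm H (Ts x) <= K * hnorm H x)
  (adjT : forall x y, inner (T x) y = inner x (Ts y))
  (P : nat -> H -> H) (HP : filtration H P)
  (Hq : Un_cv (fun n => opnorm H (fun x => vsub H (T (P n x)) (P n (T (P n x))))) 0
      \/ Un_cv (fun n => opnorm H (fun x => vsub H (Ts (P n x)) (P n (Ts (P n x))))) 0) :
  forall eps, eps > 0 -> exists N : nat, forall n : nat, (n >= N)%nat -> forall z : Cx,
    Rabs (Psi_on H (range H (P n)) (fun x => P n (T x)) z - Psi H T z) < eps.
Proof.
  intros eps he. destruct (classic (exists x, unitv H x)) as [nt|triv].
  2:{ exists O. intros n _ z. unfold Psi.
      rewrite !Psi_trivial_space by auto using subspace_range, subspace_full, filtration_proj.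
      rewrite Rminus_0_r, Rabs_R0. lra. }
  assert (ntH : nontrivial H (full H))
    by (destruct nt as [x ux]; exists x; split; [exact I|apply unitv_neq0; auto]).
  destruct (filtration_nontrivial H P HP nt) as [N0 h0].
  destruct (filtration_shift_approx H P HP T K (eps / 4) LT hK K0 ltac:(lra) nt) as [N1 h1].
  destruct (filtration_shift_approx H P HP Ts K (eps / 4) LTs hKs K0 ltac:(lra) nt) as [N2 h2].
  assert (defect : exists N3, forall n, (n >= N3)%nat ->
    (forall x, range H (P n) x -> hnorm H (vsub H (T x) (P n (T x))) <= eps / 2 * hnorm H x) \/
    (forall x, range H (P n) x -> hnorm H (vsub H (Ts x) (P n (Ts x))) <= eps / 2 * hnorm H x)).
  { destruct Hq as [q|q];
      [destruct (quasitriangular_defect H P HP T K (eps / 2) LT hK ltac:(lra) q) as [N3 h3]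
      |destruct (quasitriangular_defect H P HP Ts K (eps / 2) LTs hKs ltac:(lra) q) as [N3 h3]];
      exists N3; auto. }
  destruct defect as [N3 h3].
  exists (max (max N0 N1) (max N2 N3)). intros n hn z.
  destruct (filtration_span H P HP n) as [k [e sp]].
  pose proof (Psi_compression_upper H comp T Ts K LT LTs hK adjT (P n) (filtration_proj H P HP n)
    (h0 n ltac:(lia)) ntH z (eps / 4) ltac:(lra) (h1 n ltac:(lia) z) (h2 n ltac:(lia) (Cconj z))).
  pose proof (Psi_compression_lower H T Ts LT LTs adjT (P n) (filtration_proj H P HP n)
    (h0 n ltac:(lia)) ntH k e sp z (eps / 2) (h3 n ltac:(lia))).
  apply Rabs_def1; lra.
Qed.

Theorem mainTheorem11 (H : HilbertSpace)
  (Hcomplete : complete_space H) (Hsep : separable_space H)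
  (T : H -> H) (HT : is_bounded_operator H T)
  (P : nat -> H -> H) (HP : filtration H P)
  (Hqt : Un_cv (fun n => opnorm H (fun x => vsub H (T (P n x)) (P n (T (P n x))))) 0
         \/ exists Tstar : H -> H, is_bounded_operator H Tstar /\ is_adjoint H T Tstar /\
              Un_cv (fun n => opnorm H
                       (fun x => vsub H (Tstar (P n x)) (P n (Tstar (P n x))))) 0) :
  forall eps, eps > 0 -> exists N : nat, forall n : nat, (n >= N)%nat -> forall z : Cx,
    Rabs (Psi_on H (range H (P n)) (fun x => P n (T x)) z - Psi H T z) < eps.
Proof.
  assert (adjoint : exists Ts, is_bounded_operator H Ts /\ is_adjoint H T Ts /\
    (Un_cv (fun n => opnorm H (fun x => vsub H (T (P n x)) (P n (T (P n x))))) 0 \/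
     Un_cv (fun n => opnorm H (fun x => vsub H (Ts (P n x)) (P n (Ts (P n x))))) 0)).
  { destruct Hqt as [q|[Ts [bTs [adj q]]]]; [|exists Ts; auto].
    destruct (adjoint_exists H Hcomplete T HT) as [Ts [bTs adj]]. exists Ts; auto. }
  destruct adjoint as [Ts [[LTs [KS hKS]] [adj q]]]. destruct HT as [LT [KT hKT]].
  pose proof (Rle_abs KT). pose proof (Rle_abs KS). pose proof (Rabs_pos KT). pose proof (Rabs_pos KS).
  apply (Psi_compression_converges H Hcomplete T Ts (Rabs KT + Rabs KS)); auto; try lra;
    [apply (op_bound_weaken H T KT) | apply (op_bound_weaken H Ts KS)]; auto; lra.
Qed.
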